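(* Suppose the joint distribution $F$ of $\mathbf C$ is smooth and fully supported on $[0,\bar C]^N$. Then for each prosumer $i$ and each fixed $\mathbf x_{-i}\in[0,\bar C]^{N-1}$, the expected penalty $x_i\mapsto \mathbb E[\phi(x_i,\mathbf x_{-i};\mathbf C)]$ is continuously differentiable and convex on $[0,\bar C]$, and it is continuous in $\mathbf x_{-i}$. Consequently $\pi_i(x_i,\mathbf x_{-i},\rho)$ is concave in $x_i$ and jointly continuous in $(x_i,\mathbf x_{-i})$.
   Context: There are $N\ge1$ prosumers with capacities $\mathbf C=(C_1,\dots,C_N)\in[0,\bar C]^N$ with joint cdf $F$; offers $x_j\in[0,\bar C]$, $X=\sum_j x_j$, $\lambda_{RT}>0$, $z^+=\max\{z,0\}$. The penalty of prosumer $i$ is $\phi(x_i,\mathbf x_{-i};\mathbf C)=\lambda_{RT}(X-\sum_j C_j)^+\,(x_i-C_i)^+/\sum_{j=1}^N(x_j-C_j)^+$ (set to $0$ when the denominator vanishes). Prosumer $i$'s payoff is $\pi_i(x_i,\mathbf x_{-i},\rho)=\rho x_i+\mathbb E[u(d^0+C_i-x_i)-\phi(x_i,\mathbf x_{-i};\mathbf C)]$ with $\rho\ge0$, $d^0>\bar C$, and $u$ continuously differentiable, nonnegative, concave, increasing. *)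

From Stdlib Require Import Reals Lra ClassicalEpsilon.
Open Scope R_scope.

(* Vectors in R^N are functions nat -> R; only coordinates j < N matter. *)
Fixpoint rsum (n : nat) (f : nat -> R) : R :=
  match n with O => 0 | S k => rsum k f + f k end.

Definition upd (c : nat -> R) (k : nat) (t : R) : nat -> R :=
  fun j => if Nat.eqb j k then t else c j.

Definition in_cube (N : nat) (Cbar : R) (c : nat -> R) : Prop :=
  forall j, (j < N)%nat -> 0 <= c j <= Cbar.

(* 1-D Riemann integral, set to 0 when the integrand is not Riemann integrable *)
Definition Rint (g : R -> R) (a b : R) : R :=
  match excluded_middle_informative
          (exists pr : Riemann_integrable g a b, True) with
  | left H => RiemannInt (proj1_sig (constructive_indefinite_description _ H))
  | right _ => 0
  end.

Fixpoint iint (n : nat) (Cbar : R) (g : (nat -> R) -> R) (c : nat -> R) : R :=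
  match n with
  | O => g c
  | S k => Rint (fun t => iint k Cbar g (upd c k t)) 0 Cbar
  end.

(* expectation of h(C) when C has density f on [0,Cbar]^N *)
Definition Expect (N : nat) (Cbar : R) (f : (nat -> R) -> R)
  (h : (nat -> R) -> R) : R :=
  iint N Cbar (fun c => h c * f c) (fun _ => 0).

Definition cont_on_cube (N : nat) (Cbar : R) (g : (nat -> R) -> R) : Prop :=
  forall c, in_cube N Cbar c -> forall eps, 0 < eps -> exists del, 0 < del /\
    forall c', in_cube N Cbar c' ->
      (forall j, (j < N)%nat -> Rabs (c' j - c j) < del) ->
      Rabs (g c' - g c) < eps.

Definition phi (lam : R) (N i : nat) (x c : nat -> R) : R :=
  let D := rsum N (fun j => Rmax (x j - c j) 0) in
  if Req_EM_T D 0 then 0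
  else lam * Rmax (rsum N x - rsum N c) 0 * Rmax (x i - c i) 0 / D.

Definition ExpPen (lam : R) (N : nat) (Cbar : R) (f : (nat -> R) -> R)
  (i : nat) (x : nat -> R) : R :=
  Expect N Cbar f (fun c => phi lam N i x c).

Definition payoff (lam : R) (N : nat) (Cbar : R) (f : (nat -> R) -> R)
  (u : R -> R) (d0 : R) (i : nat) (x : nat -> R) (rho : R) : R :=
  rho * x i + Expect N Cbar f (fun c => u (d0 + c i - x i) - phi lam N i x c).

Definition convex_on (g : R -> R) (a b : R) : Prop :=
  forall s t l, a <= s <= b -> a <= t <= b -> 0 <= l <= 1 ->
    g (l * s + (1 - l) * t) <= l * g s + (1 - l) * g t.
Definition concave_on (g : R -> R) (a b : R) : Prop :=
  forall s t l, a <= s <= b -> a <= t <= b -> 0 <= l <= 1 ->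
    l * g s + (1 - l) * g t <= g (l * s + (1 - l) * t).

Definition cont_on_interval (g : R -> R) (a b : R) : Prop :=
  forall s, a <= s <= b -> forall eps, 0 < eps -> exists del, 0 < del /\
    forall t, a <= t <= b -> Rabs (t - s) < del -> Rabs (g t - g s) < eps.

Definition C1_on (g : R -> R) (a b : R) : Prop :=
  cont_on_interval g a b /\
  exists g', (forall t, a < t < b -> derivable_pt_lim g t (g' t)) /\
             cont_on_interval g' a b.

From Stdlib Require Import Reals Lra Lia Psatz ClassicalEpsilon Classical FunctionalExtensionality.
From Coquelicot Require Import Coquelicot.
Open Scope R_scope.

(* Fix C and x_{-i} and write s = x_i - C_i.  Then phi is a function of s alone,
   lam (A + s)^+ s^+ / (P + s^+) with P >= A, which is convex, nondecreasing and
   lam-Lipschitz, and smooth away from its two kinks s = 0 and s = -A.  Integrating against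
   the bounded density gives a convex, lam-Lipschitz expected penalty whose symmetric second
   difference at step h is at most lam h times the probability that C_i or sum_j C_j lies
   within distance d of a kink, plus O(h^2/d).  Dominating that probability by a Lorentzian
   of width d, integrated along a single coordinate, shows that it is O(d); hence the second
   differences are o(h).  A convex function with this property is differentiable, and the
   derivative of a convex function differentiable on an interval is monotone with no jumps,
   hence continuous.  Continuity in x comes from uniform continuity of the integrand on the
   compact cube (Heine's theorem, by bisection), concavity of the payoff from that of u. *)

Lemma Rint_RInt g a b : ex_RInt g a b -> Rint g a b = RInt g a b.
Proof.
  intros H. unfold Rint.
  destruct excluded_middle_informative as [e|n].
  - destruct (constructive_indefinite_description _ e) as [pr Hpr]. simpl.
    symmetry; apply RInt_Reals.
  - exfalso; apply n. exists (ex_RInt_Reals_0 _ _ _ H); auto.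
Qed.

Lemma Rint_ext g1 g2 a b : a <= b -> (forall x, a <= x <= b -> g1 x = g2 x) ->
  Rint g1 a b = Rint g2 a b.
Proof.
  intros Hab H.
  assert (Ex : forall g g' : R -> R, (forall x, a <= x <= b -> g x = g' x) ->
                ex_RInt g a b -> ex_RInt g' a b).
  { intros g g' E I. apply ex_RInt_Reals_1, (Riemann_integrable_ext g).
    - intros x Hx. rewrite Rmin_left, Rmax_right in Hx by lra. auto.
    - apply ex_RInt_Reals_0; auto. }
  destruct (classic (ex_RInt g1 a b)) as [I|NI].
  - rewrite !Rint_RInt by eauto. apply RInt_ext. intros x Hx.
    rewrite Rmin_left, Rmax_right in Hx by lra. apply H; lra.
  - assert (NI2 : ~ ex_RInt g2 a b) by (intro I2; apply NI, (Ex g2); auto; intros; symmetry; auto).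
    unfold Rint.
    destruct excluded_middle_informative as [[pr Hpr]|];
      [exfalso; apply NI, (ex_RInt_Reals_1 _ _ _ pr)|].
    destruct excluded_middle_informative as [[pr Hpr]|];
      [exfalso; apply NI2, (ex_RInt_Reals_1 _ _ _ pr)|].
    reflexivity.
Qed.

Lemma upd_same c k t : upd c k t k = t.
Proof. unfold upd. rewrite Nat.eqb_refl. auto. Qed.

Lemma upd_other c k t j : j <> k -> upd c k t j = c j.
Proof. intros H. unfold upd. destruct (Nat.eqb_spec j k); [lia|auto]. Qed.

Lemma in_cube_upd M Cb c k t : in_cube M Cb c -> 0 <= t <= Cb -> in_cube M Cb (upd c k t).
Proof. intros H Ht j Hj. unfold upd. destruct (Nat.eqb j k); auto. Qed.

Lemma in_cube_zero M Cb : 0 <= Cb -> in_cube M Cb (fun _ => 0).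
Proof. intros HC j _. lra. Qed.

Lemma rsum_ext n f g : (forall j, (j < n)%nat -> f j = g j) -> rsum n f = rsum n g.
Proof.
  induction n; simpl; intros H; auto.
  rewrite IHn, H by (auto; intros; apply H; lia). auto.
Qed.

Lemma rsum_minus n f g : rsum n (fun j => f j - g j) = rsum n f - rsum n g.
Proof. induction n; simpl; [lra|rewrite IHn; lra]. Qed.

Lemma rsum_le n f g : (forall j, (j < n)%nat -> f j <= g j) -> rsum n f <= rsum n g.
Proof.
  induction n; simpl; intros H; [lra|].
  assert (f n <= g n) by (apply H; lia).
  assert (rsum n f <= rsum n g) by (apply IHn; intros; apply H; lia). lra.
Qed.

Lemma rsum_nonneg n f : (forall j, (j < n)%nat -> 0 <= f j) -> 0 <= rsum n f.
Proof.
  induction n; simpl; intros H; [lra|].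
  assert (0 <= f n) by (apply H; lia).
  assert (0 <= rsum n f) by (apply IHn; intros; apply H; lia). lra.
Qed.

Lemma rsum_split n f i : (i < n)%nat ->
  rsum n f = rsum n (fun j => if Nat.eqb j i then 0 else f j) + f i.
Proof.
  induction n; intros Hi; [lia|]. simpl.
  destruct (Nat.eqb_spec n i).
  - subst. rewrite (rsum_ext i (fun j => if Nat.eqb j i then 0 else f j) f); [lra|].
    intros j Hj. destruct (Nat.eqb_spec j i); [lia|auto].
  - rewrite (IHn ltac:(lia)). lra.
Qed.

Lemma rsum_upd n c i t : (i < n)%nat -> rsum n (upd c i t) = rsum n c - c i + t.
Proof.
  intros Hi. rewrite (rsum_split n (upd c i t) i Hi), (rsum_split n c i Hi), upd_same.
  rewrite (rsum_ext n (fun j => if Nat.eqb j i then 0 else upd c i t j)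
                      (fun j => if Nat.eqb j i then 0 else c j)); [lra|].
  intros j _. destruct (Nat.eqb_spec j i); auto. rewrite upd_other; auto.
Qed.

Lemma Rmax_eq_abs a b : Rmax a b = (a + b + Rabs (a - b)) / 2.
Proof.
  unfold Rmax. destruct (Rle_dec a b).
  - rewrite Rabs_left1 by lra. lra.
  - rewrite Rabs_right by lra. lra.
Qed.

(** * Continuity on the cube *)

Definition cont_at_cube (M : nat) (Cb : R) (g : (nat -> R) -> R) (z : nat -> R) : Prop :=
  forall eps, 0 < eps -> exists del, 0 < del /\ forall z', in_cube M Cb z' ->
    (forall j, (j < M)%nat -> Rabs (z' j - z j) < del) -> Rabs (g z' - g z) < eps.

Definition ucont_cube (M : nat) (Cb : R) (g : (nat -> R) -> R) : Prop :=
  forall eps, 0 < eps -> exists del, 0 < del /\ forall c c', in_cube M Cb c -> in_cube M Cb c' ->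
    (forall j, (j < M)%nat -> Rabs (c' j - c j) < del) -> Rabs (g c' - g c) < eps.

Section ContAtCube.

Variables (M : nat) (Cb : R) (z : nat -> R).

Lemma cont_at_cube_const a : cont_at_cube M Cb (fun _ => a) z.
Proof.
  intros e He. exists 1. split; [lra|]. intros.
  rewrite Rminus_eq_0, Rabs_R0. lra.
Qed.

Lemma cont_at_cube_coord j : (j < M)%nat -> cont_at_cube M Cb (fun w => w j) z.
Proof. intros Hj e He. exists e. split; [auto|]. intros z' _ H. apply H; auto. Qed.

Lemma cont_at_cube_ext g1 g2 : (forall w, g1 w = g2 w) ->
  cont_at_cube M Cb g1 z -> cont_at_cube M Cb g2 z.
Proof.
  intros E H e He. destruct (H e He) as [d [Hd K]]. exists d; split; auto.
  intros; rewrite <- !E; auto.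
Qed.

Lemma cont_at_cube_plus g1 g2 : cont_at_cube M Cb g1 z -> cont_at_cube M Cb g2 z ->
  cont_at_cube M Cb (fun w => g1 w + g2 w) z.
Proof.
  intros H1 H2 e He.
  destruct (H1 (e/2) ltac:(lra)) as [d1 [Hd1 K1]].
  destruct (H2 (e/2) ltac:(lra)) as [d2 [Hd2 K2]].
  exists (Rmin d1 d2). split; [apply Rmin_pos; auto|]. intros z' Hz Hc.
  assert (A1 := K1 z' Hz (fun j Hj => Rlt_le_trans _ _ _ (Hc j Hj) (Rmin_l _ _))).
  assert (A2 := K2 z' Hz (fun j Hj => Rlt_le_trans _ _ _ (Hc j Hj) (Rmin_r _ _))).
  replace (g1 z' + g2 z' - (g1 z + g2 z)) with ((g1 z' - g1 z) + (g2 z' - g2 z)) by ring.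
  eapply Rle_lt_trans; [apply Rabs_triang|]. lra.
Qed.

Lemma cont_at_cube_comp g F : cont_at_cube M Cb g z -> continuity_pt F (g z) ->
  cont_at_cube M Cb (fun w => F (g w)) z.
Proof.
  intros H HF e He. destruct (HF e He) as [a [Ha Ka]].
  destruct (H a Ha) as [d [Hd Kd]]. exists d. split; auto. intros z' Hz Hc.
  destruct (Req_dec (g z') (g z)) as [E|E].
  - rewrite E, Rminus_eq_0, Rabs_R0. lra.
  - apply (Ka (g z')). split; [split; [exact I|auto]|]. apply Kd; auto.
Qed.

Lemma cont_at_cube_scal a g : cont_at_cube M Cb g z -> cont_at_cube M Cb (fun w => a * g w) z.
Proof.
  intros H. apply (cont_at_cube_comp g (fun y => a * y)); auto.
  apply (continuity_pt_scal (fun y => y)), continuity_pt_id.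
Qed.

Lemma cont_at_cube_minus g1 g2 : cont_at_cube M Cb g1 z -> cont_at_cube M Cb g2 z ->
  cont_at_cube M Cb (fun w => g1 w - g2 w) z.
Proof.
  intros H1 H2. apply (cont_at_cube_ext (fun w => g1 w + (-1) * g2 w)); [intros; ring|].
  apply cont_at_cube_plus, cont_at_cube_scal; auto.
Qed.

Lemma cont_at_cube_mult g1 g2 : cont_at_cube M Cb g1 z -> cont_at_cube M Cb g2 z ->
  cont_at_cube M Cb (fun w => g1 w * g2 w) z.
Proof.
  intros H1 H2.
  assert (Sq : forall g, cont_at_cube M Cb g z -> cont_at_cube M Cb (fun w => g w * g w) z).
  { intros g H. apply (cont_at_cube_comp g (fun y => y * y)); auto.
    apply (continuity_pt_mult (fun y => y) (fun y => y)); apply continuity_pt_id. }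
  apply (cont_at_cube_ext
    (fun w => /4 * ((g1 w + g2 w) * (g1 w + g2 w) - (g1 w - g2 w) * (g1 w - g2 w)))).
  { intros; field. }
  apply cont_at_cube_scal, cont_at_cube_minus; apply Sq;
    [apply cont_at_cube_plus | apply cont_at_cube_minus]; auto.
Qed.

Lemma cont_at_cube_div g1 g2 : cont_at_cube M Cb g1 z -> cont_at_cube M Cb g2 z -> g2 z <> 0 ->
  cont_at_cube M Cb (fun w => g1 w / g2 w) z.
Proof.
  intros H1 H2 Hz. apply cont_at_cube_mult; auto.
  apply (cont_at_cube_comp g2 (fun y => / y)); auto.
  apply (continuity_pt_inv (fun y => y)); auto. apply continuity_pt_id.
Qed.

Lemma cont_at_cube_Rmax g1 g2 : cont_at_cube M Cb g1 z -> cont_at_cube M Cb g2 z ->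
  cont_at_cube M Cb (fun w => Rmax (g1 w) (g2 w)) z.
Proof.
  intros H1 H2.
  apply (cont_at_cube_ext (fun w => /2 * (g1 w + g2 w + Rabs (g1 w - g2 w)))).
  { intros; rewrite Rmax_eq_abs; field. }
  apply cont_at_cube_scal, cont_at_cube_plus; [apply cont_at_cube_plus; auto|].
  apply (cont_at_cube_comp (fun w => g1 w - g2 w) Rabs).
  - apply cont_at_cube_minus; auto.
  - apply Rcontinuity_abs.
Qed.

Lemma cont_at_cube_rsum n (G : nat -> (nat -> R) -> R) :
  (forall j, (j < n)%nat -> cont_at_cube M Cb (G j) z) ->
  cont_at_cube M Cb (fun w => rsum n (fun j => G j w)) z.
Proof.
  induction n; intros H; simpl.
  - apply cont_at_cube_const.
  - apply cont_at_cube_plus; [apply IHn; intros|]; apply H; lia.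
Qed.

End ContAtCube.

Lemma cont_at_cube_widen M M' Cb g z : (M <= M')%nat ->
  cont_at_cube M Cb g z -> cont_at_cube M' Cb g z.
Proof.
  intros HM H e He. destruct (H e He) as [d [Hd K]]. exists d. split; auto.
  intros z' Hz' Cl. apply K; intros j Hj; [apply Hz'|apply Cl]; lia.
Qed.

Section UcontCube.

Variables (M : nat) (Cb : R).

Lemma ucont_cube_const a : ucont_cube M Cb (fun _ => a).
Proof.
  intros e He. exists 1. split; [lra|]. intros.
  rewrite Rminus_eq_0, Rabs_R0; lra.
Qed.

Lemma ucont_cube_ext g1 g2 : (forall c, in_cube M Cb c -> g1 c = g2 c) ->
  ucont_cube M Cb g1 -> ucont_cube M Cb g2.
Proof.
  intros E H e He. destruct (H e He) as [d [Hd K]]. exists d. split; auto.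
  intros c c' Hc Hc' Cl. rewrite <- !E by auto. auto.
Qed.

Lemma ucont_cube_lin g1 g2 a b : ucont_cube M Cb g1 -> ucont_cube M Cb g2 ->
  ucont_cube M Cb (fun w => a * g1 w + b * g2 w).
Proof.
  intros H1 H2 e He.
  assert (Scaled : forall a' g, ucont_cube M Cb g -> exists d, 0 < d /\ forall c c',
            in_cube M Cb c -> in_cube M Cb c' ->
            (forall j, (j < M)%nat -> Rabs (c' j - c j) < d) ->
            Rabs (a' * g c' - a' * g c) < e / 2).
  { intros a' g H. destruct (H (e / (2 * (Rabs a' + 1)))) as [d [Hd K]].
    { apply Rdiv_lt_0_compat; [lra|]. pose proof (Rabs_pos a'). lra. }
    exists d. split; auto. intros c c' Hc Hc' Cl.
    rewrite <- Rmult_minus_distr_l, Rabs_mult. pose proof (Rabs_pos a').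
    pose proof (K c c' Hc Hc' Cl).
    apply Rle_lt_trans with (Rabs a' * (e / (2 * (Rabs a' + 1)))).
    - apply Rmult_le_compat_l; lra.
    - apply (Rmult_lt_reg_r (2 * (Rabs a' + 1))); [lra|]. field_simplify; nra. }
  destruct (Scaled a g1 H1) as [d1 [Hd1 K1]]. destruct (Scaled b g2 H2) as [d2 [Hd2 K2]].
  exists (Rmin d1 d2). split; [apply Rmin_pos; auto|]. intros c c' Hc Hc' Cl.
  assert (A1 := K1 c c' Hc Hc' (fun j Hj => Rlt_le_trans _ _ _ (Cl j Hj) (Rmin_l _ _))).
  assert (A2 := K2 c c' Hc Hc' (fun j Hj => Rlt_le_trans _ _ _ (Cl j Hj) (Rmin_r _ _))).
  replace (a * g1 c' + b * g2 c' - (a * g1 c + b * g2 c))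
    with ((a * g1 c' - a * g1 c) + (b * g2 c' - b * g2 c)) by ring.
  eapply Rle_lt_trans; [apply Rabs_triang|]. lra.
Qed.

Lemma ucont_cube_scal a g : ucont_cube M Cb g -> ucont_cube M Cb (fun w => a * g w).
Proof.
  intros H. apply (ucont_cube_ext (fun w => a * g w + 0 * g w)); [intros; ring|].
  apply ucont_cube_lin; auto.
Qed.

(* The bound grows by at most 1 along each of the n steps of a segment from 0 to c. *)
Lemma ucont_cube_bounded g : 0 < Cb -> ucont_cube M Cb g ->
  exists B, forall c, in_cube M Cb c -> Rabs (g c) <= B.
Proof.
  intros HC Hg. destruct (Hg 1 ltac:(lra)) as [d [Hd K]].
  destruct (archimed_cor1 (d / Cb)) as [n [Hn Hn0]]; [apply Rdiv_lt_0_compat; auto|].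
  exists (Rabs (g (fun _ => 0)) + INR n). intros c Hc.
  assert (Hnp : 0 < INR n) by (apply lt_0_INR; auto).
  set (p := fun k : nat => fun j => INR k / INR n * c j).
  assert (Pc : forall k, (k <= n)%nat -> in_cube M Cb (p k)).
  { intros k Hk j Hj. unfold p. destruct (Hc j Hj).
    assert (0 <= INR k <= INR n) by (split; [apply pos_INR|apply le_INR; auto]).
    assert (0 <= INR k / INR n <= 1).
    { split; [apply Rdiv_le_0_compat; lra|].
      apply (Rmult_le_reg_r (INR n)); auto. field_simplify; lra. }
    nra. }
  assert (Ind : forall k, (k <= n)%nat -> Rabs (g (p k)) <= Rabs (g (fun _ => 0)) + INR k).
  { induction k; intros Hk.
    - replace (p 0%nat) with (fun _ : nat => 0); [simpl; lra|].
      apply functional_extensionality. intros j. unfold p. simpl. field. lra.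
    - specialize (IHk ltac:(lia)). rewrite S_INR.
      assert (Rabs (g (p (S k)) - g (p k)) < 1).
      { apply K; [apply Pc; lia|apply Pc; lia|]. intros j Hj. unfold p. rewrite S_INR.
        replace ((INR k + 1) / INR n * c j - INR k / INR n * c j) with (c j / INR n)
          by (field; lra).
        destruct (Hc j Hj). rewrite Rabs_right by (apply Rle_ge, Rdiv_le_0_compat; lra).
        apply Rle_lt_trans with (Cb / INR n).
        - apply Rmult_le_compat_r; auto. left; apply Rinv_0_lt_compat; auto.
        - apply (Rmult_lt_reg_r (/ Cb)); [apply Rinv_0_lt_compat; auto|].
          replace (Cb / INR n * / Cb) with (/ INR n) by (field; lra). auto. }
      pose proof (Rabs_triang (g (p (S k)) - g (p k)) (g (p k))).
      replace (g (p (S k)) - g (p k) + g (p k)) with (g (p (S k))) in * by ring. lra. }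
  replace c with (p n) by (apply functional_extensionality; intros j; unfold p; field; lra).
  apply Ind; auto.
Qed.

End UcontCube.

Lemma nested_intervals (s w : nat -> R) :
  (forall n, 0 <= w n) -> (forall n, s n <= s (S n)) ->
  (forall n, s (S n) + w (S n) <= s n + w n) ->
  exists z, forall n, s n <= z <= s n + w n.
Proof.
  intros Hw Hs Hsw.
  assert (Nest : forall n m, s n <= s (n + m)%nat /\ s (n + m)%nat + w (n + m)%nat <= s n + w n).
  { intros n m. induction m as [|m [I1 I2]].
    - rewrite Nat.add_0_r. lra.
    - rewrite Nat.add_succ_r. specialize (Hs (n + m)%nat). specialize (Hsw (n + m)%nat). lra. }
  assert (Below : forall n k, s k <= s n + w n).
  { intros n k. destruct (Nat.le_gt_cases n k).
    - destruct (Nest n (k - n)%nat) as [_ K]. replace (n + (k - n))%nat with k in K by lia.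
      specialize (Hw k). lra.
    - destruct (Nest k (n - k)%nat) as [K _]. replace (k + (n - k))%nat with n in K by lia.
      specialize (Hw n). lra. }
  destruct (completeness (fun y => exists n, y = s n)) as [z [Ub Lub]].
  - exists (s 0%nat + w 0%nat). intros y [k ->]. apply Below.
  - exists (s 0%nat). eauto.
  - exists z. intros n. split.
    + apply Ub. eauto.
    + apply Lub. intros y [k ->]. apply Below.
Qed.

Lemma small_dyadic Cb r : 0 < Cb -> 0 < r -> exists n, Cb / 2 ^ n < r.
Proof.
  intros HC Hr. destruct (archimed_cor1 (r / Cb)) as [n [Hn Hn0]]; [apply Rdiv_lt_0_compat; auto|].
  exists n.
  assert (0 < INR n) by (apply lt_0_INR; auto).
  assert (INR n <= 2 ^ n).
  { clear. induction n; [simpl; lra|]. rewrite S_INR. simpl.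
    assert (1 <= 2 ^ n) by (apply pow_R1_Rle; lra). lra. }
  apply Rle_lt_trans with (Cb / INR n).
  - apply Rmult_le_compat_l; [lra|]. apply Rinv_le_contravar; auto.
  - apply (Rmult_lt_reg_r (/ Cb)); [apply Rinv_0_lt_compat; auto|].
    replace (Cb / INR n * / Cb) with (/ INR n) by (field; lra). auto.
Qed.

Section Heine.

Variables (M : nat) (Cb : R) (g : (nat -> R) -> R) (eps : R).

Definition in_box (a w c : nat -> R) : Prop :=
  forall j, (j < M)%nat -> a j <= c j <= a j + w j.

(* Failure of uniform continuity localised to a box; bisection preserves it. *)
Definition nonuniform_on (a w : nat -> R) : Prop :=
  forall del, 0 < del -> exists c c', in_box a w c /\ in_cube M Cb c /\ in_cube M Cb c' /\
    (forall j, (j < M)%nat -> Rabs (c' j - c j) < del) /\ eps <= Rabs (g c' - g c).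

Lemma nonuniform_on_ext a w a' w' : (forall j, (j < M)%nat -> a j = a' j /\ w j = w' j) ->
  nonuniform_on a w -> nonuniform_on a' w'.
Proof.
  intros E H d Hd. destruct (H d Hd) as [c [c' [B Rest]]]. exists c, c'. split; auto.
  intros j Hj. destruct (E j Hj) as [<- <-]. apply B; auto.
Qed.

Lemma nonuniform_on_halve a w k : (k < M)%nat -> nonuniform_on a w ->
  exists a', (a' = a \/ a' = upd a k (a k + w k / 2)) /\ nonuniform_on a' (upd w k (w k / 2)).
Proof.
  intros Hk H. apply NNPP. intros Hn.
  assert (N1 : ~ nonuniform_on a (upd w k (w k / 2))) by (intro B; apply Hn; exists a; auto).
  assert (N2 : ~ nonuniform_on (upd a k (a k + w k / 2)) (upd w k (w k / 2)))
    by (intro B; apply Hn; eexists; split; [right; reflexivity|exact B]).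
  unfold nonuniform_on in N1, N2.
  apply not_all_ex_not in N1. destruct N1 as [d1 N1].
  apply not_all_ex_not in N2. destruct N2 as [d2 N2].
  apply imply_to_and in N1. destruct N1 as [Hd1 N1].
  apply imply_to_and in N2. destruct N2 as [Hd2 N2].
  destruct (H (Rmin d1 d2) (Rmin_pos _ _ Hd1 Hd2)) as [c [c' [B [C1 [C2 [Cl E]]]]]].
  assert (Box : forall a', (a' = a \/ a' = upd a k (a k + w k / 2)) ->
                 a' k <= c k <= a' k + w k / 2 -> in_box a' (upd w k (w k / 2)) c).
  { intros a' Ha' Hck j Hj. unfold upd. destruct (Nat.eqb_spec j k); [subst; lra|].
    destruct Ha' as [->| ->]; [|rewrite upd_other by auto]; apply B; auto. }
  destruct (Rle_dec (c k) (a k + w k / 2)) as [L|L].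
  - apply N1. exists c, c'. specialize (B k Hk).
    split; [apply Box; auto; lra|]. do 2 (split; [auto|]). split; [|auto].
    intros j Hj. apply Rlt_le_trans with (Rmin d1 d2); [auto|apply Rmin_l].
  - apply N2. exists c, c'. specialize (B k Hk).
    split; [apply Box; auto; rewrite upd_same; lra|]. do 2 (split; [auto|]). split; [|auto].
    intros j Hj. apply Rlt_le_trans with (Rmin d1 d2); [auto|apply Rmin_r].
Qed.

Lemma nonuniform_on_subcube a w0 : 0 <= w0 -> nonuniform_on a (fun _ => w0) ->
  exists a', (forall j, (j < M)%nat -> a j <= a' j <= a j + w0 / 2) /\
             nonuniform_on a' (fun _ => w0 / 2).
Proof.
  intros Hw H.
  assert (Step : forall m, (m <= M)%nat -> exists a',
    (forall j, (j < m)%nat -> a j <= a' j <= a j + w0 / 2) /\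
    (forall j, (m <= j)%nat -> a' j = a j) /\
    nonuniform_on a' (fun j => if Nat.ltb j m then w0 / 2 else w0)).
  { induction m; intros Hm.
    - exists a. split; [intros; lia|split; [auto|]].
      eapply nonuniform_on_ext; [|exact H]. intros; simpl; auto.
    - destruct (IHm ltac:(lia)) as [a' [A1 [A2 A3]]].
      destruct (nonuniform_on_halve a' _ m ltac:(lia) A3) as [b [Hb B]].
      rewrite Nat.ltb_irrefl in Hb, B.
      exists b. split; [|split].
      + intros j Hj. destruct (Nat.eq_dec j m) as [->|Ne].
        * rewrite (A2 m ltac:(lia)) in Hb.
          destruct Hb as [-> | ->]; [rewrite A2 by lia; lra|rewrite upd_same; lra].
        * destruct Hb as [-> | ->]; [|rewrite upd_other by auto]; apply A1; lia.
      + intros j Hj. destruct Hb as [-> | ->]; [|rewrite upd_other by lia]; apply A2; lia.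
      + eapply nonuniform_on_ext; [|exact B]. intros j Hj. split; auto. unfold upd.
        destruct (Nat.eqb_spec j m), (Nat.ltb_spec j m), (Nat.ltb_spec j (S m)); auto; lia. }
  destruct (Step M (le_n _)) as [a' [A1 [_ A3]]]. exists a'. split; auto.
  eapply nonuniform_on_ext; [|exact A3]. intros j Hj. split; auto.
  destruct (Nat.ltb_spec j M); [auto|lia].
Qed.

Definition next_box (w : R) (a : nat -> R) : nat -> R :=
  epsilon (inhabits a) (fun a' => (forall j, (j < M)%nat -> a j <= a' j <= a j + w / 2) /\
                                  nonuniform_on a' (fun _ => w / 2)).

Fixpoint nested_box (n : nat) : nat -> R :=
  match n with
  | O => fun _ => 0
  | S k => next_box (Cb / 2 ^ k) (nested_box k)
  end.

Lemma nested_box_spec : 0 < Cb -> nonuniform_on (fun _ => 0) (fun _ => Cb) ->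
  forall n, nonuniform_on (nested_box n) (fun _ => Cb / 2 ^ n) /\
    forall j, (j < M)%nat ->
      nested_box n j <= nested_box (S n) j <= nested_box n j + Cb / 2 ^ (S n).
Proof.
  intros HC H0.
  assert (Half : forall n, Cb / 2 ^ S n = Cb / 2 ^ n / 2)
    by (intros; simpl; field; apply pow_nonzero; lra).
  assert (Next : forall n, nonuniform_on (nested_box n) (fun _ => Cb / 2 ^ n) ->
    nonuniform_on (nested_box (S n)) (fun _ => Cb / 2 ^ S n) /\
    forall j, (j < M)%nat ->
      nested_box n j <= nested_box (S n) j <= nested_box n j + Cb / 2 ^ (S n)).
  { intros n Bn. rewrite Half. apply and_comm.
    apply (epsilon_spec (inhabits (nested_box n))
             (fun a' => (forall j, (j < M)%nat ->
                           nested_box n j <= a' j <= nested_box n j + Cb / 2 ^ n / 2) /\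
                        nonuniform_on a' (fun _ => Cb / 2 ^ n / 2))).
    destruct (nonuniform_on_subcube (nested_box n) (Cb / 2 ^ n)) as [a' Ha']; eauto.
    left; apply Rdiv_lt_0_compat; auto; apply pow_lt; lra. }
  assert (Bad : forall n, nonuniform_on (nested_box n) (fun _ => Cb / 2 ^ n)).
  { induction n; [|apply Next; auto].
    eapply nonuniform_on_ext; [|exact H0]. intros; simpl; split; [auto|field]. }
  intros n. split; [|apply Next]; auto.
Qed.

End Heine.

Theorem ucont_cube_of_cont M Cb g : 0 < Cb ->
  (forall z, in_cube M Cb z -> cont_at_cube M Cb g z) -> ucont_cube M Cb g.
Proof.
  intros HC Hg. apply NNPP. intros Hn.
  apply not_all_ex_not in Hn. destruct Hn as [eps Hn].
  apply imply_to_and in Hn. destruct Hn as [He Hn].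
  assert (B0 : nonuniform_on M Cb g eps (fun _ => 0) (fun _ => Cb)).
  { intros d Hd. apply NNPP. intros N1. apply Hn. exists d. split; auto.
    intros c c' Hc Hc' Cl. apply Rnot_le_lt. intros L. apply N1. exists c, c'.
    split; [intros j Hj; specialize (Hc j Hj); lra|auto]. }
  pose proof (nested_box_spec M Cb g eps HC B0) as Spec.
  set (box := nested_box M Cb g eps) in Spec.
  set (z := fun j => epsilon (inhabits 0)
                       (fun y => forall n, box n j <= y <= box n j + Cb / 2 ^ n)).
  assert (Zp : forall j n, (j < M)%nat -> box n j <= z j <= box n j + Cb / 2 ^ n).
  { intros j n Hj. revert n. apply (epsilon_spec (inhabits 0)
      (fun y => forall n, box n j <= y <= box n j + Cb / 2 ^ n)).
    apply nested_intervals.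
    - intros; left; apply Rdiv_lt_0_compat; auto; apply pow_lt; lra.
    - intros n. apply (proj2 (Spec n) j Hj).
    - intros n. destruct (proj2 (Spec n) j Hj).
      replace (Cb / 2 ^ n) with (2 * (Cb / 2 ^ Datatypes.S n))
        by (simpl; field; apply pow_nonzero; lra).
      lra. }
  assert (Zc : in_cube M Cb z).
  { intros j Hj. destruct (Zp j 0%nat Hj). simpl in *. lra. }
  destruct (Hg z Zc (eps / 2) ltac:(lra)) as [d0 [Hd0 K0]].
  destruct (small_dyadic Cb (d0 / 2) HC ltac:(lra)) as [n Hn'].
  destruct (proj1 (Spec n) (d0 / 2) ltac:(lra)) as [c [c' [Bx [Hc [Hc' [Cl E]]]]]].
  assert (D1 : forall j, (j < M)%nat -> Rabs (c j - z j) < d0).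
  { intros j Hj. destruct (Zp j n Hj), (Bx j Hj). apply Rabs_def1; lra. }
  assert (D2 : forall j, (j < M)%nat -> Rabs (c' j - z j) < d0).
  { intros j Hj. destruct (Zp j n Hj), (Bx j Hj). pose proof (Rabs_def2 _ _ (Cl j Hj)).
    apply Rabs_def1; lra. }
  pose proof (K0 c Hc D1) as Kc. pose proof (K0 c' Hc' D2) as Kc'.
  rewrite Rabs_minus_sym in Kc.
  pose proof (Rabs_triang (g c' - g z) (g z - g c)) as T.
  replace (g c' - g z + (g z - g c)) with (g c' - g c) in T by ring. lra.
Qed.

(** * Iterated integrals over the cube *)

(* Coquelicot's linearity lemmas restated with the field operations of R instead of the
   abstract minus/scal/plus, so that they can be used for rewriting. *)
Lemma ex_RInt_Rminus (f g : R -> R) a b : ex_RInt f a b -> ex_RInt g a b ->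
  ex_RInt (fun x => f x - g x) a b.
Proof. exact (ex_RInt_minus f g a b). Qed.

Lemma RInt_Rminus (f g : R -> R) a b : ex_RInt f a b -> ex_RInt g a b ->
  RInt (fun x => f x - g x) a b = RInt f a b - RInt g a b.
Proof. exact (RInt_minus f g a b). Qed.

Lemma ex_RInt_Rscal (f : R -> R) a b u : ex_RInt f a b -> ex_RInt (fun x => u * f x) a b.
Proof. exact (ex_RInt_scal f a b u). Qed.

Lemma RInt_Rscal (f : R -> R) a b u : ex_RInt f a b -> RInt (fun x => u * f x) a b = u * RInt f a b.
Proof. exact (RInt_scal f a b u). Qed.

Lemma ex_RInt_Rlin (f g : R -> R) a b u v : ex_RInt f a b -> ex_RInt g a b ->
  ex_RInt (fun x => u * f x + v * g x) a b.
Proof.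
  intros Hf Hg. apply (ex_RInt_plus (fun x => u * f x) (fun x => v * g x));
    [exact (ex_RInt_scal f a b u Hf)|exact (ex_RInt_scal g a b v Hg)].
Qed.

Lemma RInt_Rlin (f g : R -> R) a b u v : ex_RInt f a b -> ex_RInt g a b ->
  RInt (fun x => u * f x + v * g x) a b = u * RInt f a b + v * RInt g a b.
Proof.
  intros Hf Hg.
  assert (Ef : RInt (fun x => u * f x) a b = u * RInt f a b) by exact (RInt_scal f a b u Hf).
  assert (Eg : RInt (fun x => v * g x) a b = v * RInt g a b) by exact (RInt_scal g a b v Hg).
  rewrite <- Ef, <- Eg.
  exact (RInt_plus (fun x => u * f x) (fun x => v * g x) a b
           (ex_RInt_scal f a b u Hf) (ex_RInt_scal g a b v Hg)).
Qed.

Lemma RInt_Rconst a b (c : R) : RInt (fun _ => c) a b = (b - a) * c.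
Proof. exact (RInt_const a b c). Qed.

(* Extends a function on [0, Cb] continuously to R, as ex_RInt_continuous requires. *)
Definition clamp (Cb t : R) : R := Rmax 0 (Rmin Cb t).

Lemma clamp_in Cb t : 0 <= Cb -> 0 <= clamp Cb t <= Cb.
Proof. intros. unfold clamp, Rmax, Rmin. destruct (Rle_dec Cb t); destruct (Rle_dec 0 _); lra. Qed.

Lemma clamp_id Cb t : 0 <= t <= Cb -> clamp Cb t = t.
Proof. intros. unfold clamp, Rmax, Rmin. destruct (Rle_dec Cb t); destruct (Rle_dec 0 _); lra. Qed.

Lemma clamp_lipschitz Cb s t : Rabs (clamp Cb s - clamp Cb t) <= Rabs (s - t).
Proof.
  unfold clamp, Rmax, Rmin.
  destruct (Rle_dec Cb s); destruct (Rle_dec Cb t); repeat destruct (Rle_dec 0 _);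
  unfold Rabs; repeat destruct Rcase_abs; lra.
Qed.

Definition cube_int (M : nat) (Cb : R) (g : (nat -> R) -> R) : R := iint M Cb g (fun _ => 0).

Section IteratedIntegral.

Variables (M : nat) (Cb : R).
Hypothesis HC : 0 < Cb.

Lemma ex_RInt_slice G c k : ucont_cube M Cb G -> in_cube M Cb c ->
  ex_RInt (fun t => G (upd c k t)) 0 Cb.
Proof.
  intros HG Hc.
  apply (ex_RInt_ext (fun t => G (upd c k (clamp Cb t)))).
  { intros x Hx. rewrite Rmin_left, Rmax_right in Hx by lra. rewrite clamp_id by lra. auto. }
  apply (@ex_RInt_continuous R_CompleteNormedModule). intros z _.
  apply continuity_pt_filterlim.
  intros e He. destruct (HG e He) as [d [Hd K]]. exists d. split; auto.
  intros x [_ Hx]. simpl in *. unfold Rdist in *.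
  apply K; try (apply in_cube_upd; auto; apply clamp_in; lra).
  intros j Hj. unfold upd. destruct (Nat.eqb j k).
  - eapply Rle_lt_trans; [apply clamp_lipschitz|auto].
  - rewrite Rminus_eq_0, Rabs_R0; auto.
Qed.

Lemma iint_ucont g k : ucont_cube M Cb g -> (k <= M)%nat -> ucont_cube M Cb (iint k Cb g).
Proof.
  intros Hg. induction k; intros Hk; simpl; auto.
  specialize (IHk ltac:(lia)).
  intros e He. destruct (IHk (e / (2 * Cb))) as [d [Hd K]]; [apply Rdiv_lt_0_compat; lra|].
  exists d. split; auto. intros c c' Hc Hc' Cl.
  rewrite !Rint_RInt by (apply ex_RInt_slice; auto).
  rewrite <- RInt_Rminus by (apply ex_RInt_slice; auto).
  eapply Rle_lt_trans; [apply abs_RInt_le_const with (M := e / (2 * Cb)); [lra| |]|].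
  - apply ex_RInt_Rminus; apply ex_RInt_slice; auto.
  - intros t Ht. left. apply K; try (apply in_cube_upd; auto).
    intros j Hj. unfold upd. destruct (Nat.eqb j k); [|auto].
    rewrite Rminus_eq_0, Rabs_R0; auto.
  - replace ((Cb - 0) * (e / (2 * Cb))) with (e / 2) by (field; lra). lra.
Qed.

Lemma iint_ext g1 g2 : (forall c, in_cube M Cb c -> g1 c = g2 c) ->
  forall k c, (k <= M)%nat -> in_cube M Cb c -> iint k Cb g1 c = iint k Cb g2 c.
Proof.
  intros E k. induction k; intros c Hk Hc; simpl; auto.
  apply Rint_ext; [lra|]. intros t Ht. apply IHk; [lia|]. apply in_cube_upd; auto.
Qed.

Lemma iint_lin g1 g2 a b : ucont_cube M Cb g1 -> ucont_cube M Cb g2 ->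
  forall k c, (k <= M)%nat -> in_cube M Cb c ->
  iint k Cb (fun w => a * g1 w + b * g2 w) c = a * iint k Cb g1 c + b * iint k Cb g2 c.
Proof.
  intros H1 H2 k. induction k; intros c Hk Hc; simpl; auto.
  rewrite (Rint_ext _ (fun t => a * iint k Cb g1 (upd c k t) + b * iint k Cb g2 (upd c k t)));
    [|lra|intros t Ht; apply IHk; [lia|apply in_cube_upd; auto]].
  assert (E1 := ex_RInt_slice (iint k Cb g1) c k (iint_ucont g1 k H1 ltac:(lia)) Hc).
  assert (E2 := ex_RInt_slice (iint k Cb g2) c k (iint_ucont g2 k H2 ltac:(lia)) Hc).
  rewrite !Rint_RInt by (auto; apply ex_RInt_Rlin; auto).
  apply RInt_Rlin; auto.
Qed.

Lemma iint_le g1 g2 : ucont_cube M Cb g1 -> ucont_cube M Cb g2 ->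
  (forall c, in_cube M Cb c -> g1 c <= g2 c) ->
  forall k c, (k <= M)%nat -> in_cube M Cb c -> iint k Cb g1 c <= iint k Cb g2 c.
Proof.
  intros H1 H2 L k. induction k; intros c Hk Hc; simpl; auto.
  assert (E1 := ex_RInt_slice (iint k Cb g1) c k (iint_ucont g1 k H1 ltac:(lia)) Hc).
  assert (E2 := ex_RInt_slice (iint k Cb g2) c k (iint_ucont g2 k H2 ltac:(lia)) Hc).
  rewrite !Rint_RInt by auto. apply RInt_le; auto; [lra|].
  intros t Ht. apply IHk; [lia|]. apply in_cube_upd; auto. lra.
Qed.

Lemma iint_indep g k c : (forall c j t, (j < k)%nat -> g (upd c j t) = g c) ->
  iint k Cb g c = Cb ^ k * g c.
Proof.
  revert c. induction k; intros c H; simpl; [ring|].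
  rewrite (Rint_ext _ (fun _ => Cb ^ k * g c)); [|lra|].
  - rewrite Rint_RInt, RInt_Rconst by apply ex_RInt_const. simpl. ring.
  - intros t Ht. rewrite IHk by (intros; apply H; lia). rewrite H by lia. reflexivity.
Qed.

Lemma iint_le_of_slice g m r : ucont_cube M Cb g -> (m < M)%nat ->
  (forall c j t, (j < m)%nat -> g (upd c j t) = g c) ->
  (forall c, in_cube M Cb c -> RInt (fun t => g (upd c m t)) 0 Cb <= r) ->
  forall d c, (S m + d <= M)%nat -> in_cube M Cb c -> iint (S m + d) Cb g c <= Cb ^ (m + d) * r.
Proof.
  intros Hg Hm Hind Hr d. induction d; intros c Hd Hc.
  - rewrite !Nat.add_0_r. simpl.
    rewrite (Rint_ext _ (fun t => Cb ^ m * g (upd c m t)))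
      by (lra || intros; apply iint_indep; auto).
    assert (E := ex_RInt_slice g c m Hg Hc).
    rewrite Rint_RInt, RInt_Rscal by (auto; apply ex_RInt_Rscal; auto).
    apply Rmult_le_compat_l; auto. apply pow_le; lra.
  - rewrite Nat.add_succ_r. simpl iint.
    assert (E := ex_RInt_slice _ c (S m + d) (iint_ucont g (S m + d) Hg ltac:(lia)) Hc).
    rewrite Rint_RInt by auto.
    apply Rle_trans with (RInt (fun _ => Cb ^ (m + d) * r) 0 Cb).
    + apply RInt_le; auto; [lra|apply ex_RInt_const|].
      intros t Ht. apply IHd; [lia|]. apply in_cube_upd; auto; lra.
    + rewrite RInt_Rconst, Nat.add_succ_r. simpl. lra.
Qed.

End IteratedIntegral.

Section CubeIntegral.

Variables (M : nat) (Cb : R).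
Hypothesis HC : 0 < Cb.

Lemma cube_int_lin g1 g2 a b : ucont_cube M Cb g1 -> ucont_cube M Cb g2 ->
  cube_int M Cb (fun w => a * g1 w + b * g2 w) = a * cube_int M Cb g1 + b * cube_int M Cb g2.
Proof. intros. apply (iint_lin M Cb HC); auto. apply in_cube_zero; lra. Qed.

Lemma cube_int_le g1 g2 : ucont_cube M Cb g1 -> ucont_cube M Cb g2 ->
  (forall c, in_cube M Cb c -> g1 c <= g2 c) -> cube_int M Cb g1 <= cube_int M Cb g2.
Proof. intros. apply (iint_le M Cb HC); auto. apply in_cube_zero; lra. Qed.

Lemma cube_int_const a : cube_int M Cb (fun _ => a) = Cb ^ M * a.
Proof. apply (iint_indep Cb HC); auto. Qed.

Lemma cube_int_scal g a : ucont_cube M Cb g ->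
  cube_int M Cb (fun w => a * g w) = a * cube_int M Cb g.
Proof.
  intros Hg. transitivity (cube_int M Cb (fun w => a * g w + 0 * g w)).
  - apply (iint_ext M Cb HC); [intros; ring|lia|apply in_cube_zero; lra].
  - rewrite cube_int_lin by auto. ring.
Qed.

Lemma cube_int_dist g1 g2 e : ucont_cube M Cb g1 -> ucont_cube M Cb g2 ->
  (forall c, in_cube M Cb c -> Rabs (g1 c - g2 c) <= e) ->
  Rabs (cube_int M Cb g1 - cube_int M Cb g2) <= Cb ^ M * e.
Proof.
  intros H1 H2 He.
  replace (cube_int M Cb g1 - cube_int M Cb g2)
    with (1 * cube_int M Cb g1 + (-1) * cube_int M Cb g2) by ring.
  rewrite <- cube_int_lin by auto.
  assert (Hbetween : forall c, in_cube M Cb c -> - e <= 1 * g1 c + (-1) * g2 c <= e).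
  { intros c Hc. specialize (He c Hc). apply Rabs_le_between in He. lra. }
  assert (U := ucont_cube_lin M Cb g1 g2 1 (-1) H1 H2).
  pose proof (cube_int_le (fun _ => - e) _ (ucont_cube_const M Cb _) U
                (fun c Hc => proj1 (Hbetween c Hc))) as Lo.
  pose proof (cube_int_le _ (fun _ => e) U (ucont_cube_const M Cb _)
                (fun c Hc => proj2 (Hbetween c Hc))) as Hi.
  rewrite cube_int_const in Lo, Hi. apply Rabs_le. lra.
Qed.

Lemma cube_int_le_of_slice g m r : ucont_cube M Cb g -> (m < M)%nat ->
  (forall c j t, (j < m)%nat -> g (upd c j t) = g c) ->
  (forall c, in_cube M Cb c -> RInt (fun t => g (upd c m t)) 0 Cb <= r) ->
  cube_int M Cb g <= Cb ^ (M - 1) * r.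
Proof.
  intros Hg Hm Hind Hr.
  pose proof (iint_le_of_slice M Cb HC g m r Hg Hm Hind Hr (M - 1 - m) (fun _ => 0)
                ltac:(lia) (in_cube_zero M Cb ltac:(lra))) as H.
  replace (S m + (M - 1 - m))%nat with M in H by lia.
  replace (m + (M - 1 - m))%nat with (M - 1)%nat in H by lia. exact H.
Qed.

End CubeIntegral.

(** * The penalty as a function of one offer *)

(* phi as a function of s = x_i - C_i, where A = sum_{j<>i} (x_j - C_j) and
   P = sum_{j<>i} (x_j - C_j)^+ *)
Definition pen_profile (lam A P s : R) : R :=
  if Req_EM_T (P + Rmax s 0) 0 then 0
  else lam * Rmax (A + s) 0 * Rmax s 0 / (P + Rmax s 0).

(* lam (A + s) s / (P + s) in partial fractions: the value of pen_profile past both kinks *)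
Definition pen_branch (lam A P s : R) : R := lam * (s - (P - A) + (P - A) * P / (s + P)).

Section PenaltyProfile.

Variables (lam A P : R).
Hypotheses (Hlam : 0 < lam) (HP : 0 <= P) (HAP : A <= P).

Let kink := Rmax 0 (- A).

Lemma kink_nonneg : 0 <= kink.
Proof. apply Rmax_l. Qed.

Lemma pen_profile_zero s : s <= kink -> pen_profile lam A P s = 0.
Proof.
  unfold kink, pen_profile, Rmax. intros Hs. destruct Req_EM_T; auto.
  destruct (Rle_dec 0 (- A)), (Rle_dec s 0); try destruct (Rle_dec (A + s) 0);
    unfold Rdiv; try ring; lra.
Qed.

Lemma pen_profile_nonneg s : 0 <= pen_profile lam A P s.
Proof.
  unfold pen_profile. destruct Req_EM_T; [lra|].
  pose proof (Rmax_r s 0). pose proof (Rmax_r (A + s) 0).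
  apply Rdiv_le_0_compat; [|lra]. apply Rmult_le_pos; [apply Rmult_le_pos|]; lra.
Qed.

Lemma pen_branch_kink : pen_branch lam A P kink = 0.
Proof.
  unfold pen_branch, kink, Rmax. destruct (Rle_dec 0 (- A)).
  - destruct (Req_dec (P - A) 0) as [Z|Z].
    + assert (HA0 : A = 0) by lra. assert (HP0 : P = 0) by lra.
      rewrite HA0, HP0. unfold Rdiv. ring.
    + field. lra.
  - field. lra.
Qed.

Lemma pen_profile_branch s : kink <= s -> pen_profile lam A P s = pen_branch lam A P s.
Proof.
  intros Hs. destruct (Rle_lt_or_eq_dec _ _ Hs) as [L|<-].
  - assert (0 < s /\ 0 < A + s) by (unfold kink, Rmax in L; destruct Rle_dec; lra).
    unfold pen_profile, pen_branch. rewrite !Rmax_left by lra.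
    destruct Req_EM_T; [lra|]. field. lra.
  - rewrite pen_profile_zero, pen_branch_kink; lra.
Qed.

Lemma branch_denominator_bound x y : kink <= x -> kink <= y -> (P - A) * P <= (x + P) * (y + P).
Proof. unfold kink, Rmax. destruct (Rle_dec 0 (- A)); nra. Qed.

Lemma pen_branch_increment x y : kink <= x -> x <= y ->
  0 <= pen_branch lam A P y - pen_branch lam A P x <= lam * (y - x).
Proof.
  intros Hx Hxy. pose proof kink_nonneg.
  destruct (Req_dec P 0) as [Z|Z].
  - subst. unfold pen_branch. unfold Rdiv. rewrite !Rmult_0_r, !Rmult_0_l. nra.
  - pose proof (branch_denominator_bound x y Hx ltac:(lra)).
    set (q := (P - A) * P / ((x + P) * (y + P))).
    assert (Hq : 0 <= q <= 1).
    { unfold q. split; [apply Rdiv_le_0_compat; nra|].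
      apply (Rmult_le_reg_r ((x + P) * (y + P))); [nra|]. field_simplify; nra. }
    replace (pen_branch lam A P y - pen_branch lam A P x) with (lam * (y - x) * (1 - q))
      by (unfold pen_branch, q; field; lra).
    assert (0 <= lam * (y - x)) by (apply Rmult_le_pos; lra). nra.
Qed.

Lemma pen_profile_increment s1 s2 : s1 <= s2 ->
  0 <= pen_profile lam A P s2 - pen_profile lam A P s1 <= lam * (s2 - s1).
Proof.
  intros H12. pose proof kink_nonneg.
  destruct (Rle_dec s2 kink).
  - rewrite !pen_profile_zero by lra. split; [lra|]. nra.
  - destruct (Rle_dec s1 kink).
    + rewrite (pen_profile_zero s1), pen_profile_branch by lra.
      pose proof (pen_branch_increment kink s2 (Rle_refl _) ltac:(lra)).
      rewrite pen_branch_kink in *. nra.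
    + rewrite !pen_profile_branch by lra. apply pen_branch_increment; lra.
Qed.

(* the tangent line to pen_branch at m, written with y0 = m + P *)
Definition pen_tangent (y0 r : R) : R :=
  lam * (r - (P - A) + (P - A) * P * (2 / y0 - (r + P) / (y0 * y0))).

Lemma pen_tangent_at m : kink < m -> pen_tangent (m + P) m = pen_profile lam A P m.
Proof.
  intros Hm. pose proof kink_nonneg.
  rewrite pen_profile_branch by lra. unfold pen_tangent, pen_branch. field. lra.
Qed.

Lemma pen_tangent_le m r : kink < m -> pen_tangent (m + P) r <= pen_profile lam A P r.
Proof.
  intros Hm. pose proof kink_nonneg.
  assert (OnBranch : forall r, kink <= r -> pen_tangent (m + P) r <= pen_profile lam A P r).
  { intros r0 Hr. rewrite pen_profile_branch by auto. unfold pen_tangent, pen_branch.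
    destruct (Req_dec P 0) as [Z|Z].
    - subst. unfold Rdiv. rewrite !Rmult_0_r. nra.
    - assert (0 <= (P - A) * P) by nra.
      assert (0 <= (m - r0) * (m - r0) / ((r0 + P) * ((m + P) * (m + P)))).
      { apply Rdiv_le_0_compat; [apply Rle_0_sqr|].
        apply Rmult_lt_0_compat; [|apply Rmult_lt_0_compat]; lra. }
      assert (0 <= lam * ((P - A) * P) *
                   ((m - r0) * (m - r0) / ((r0 + P) * ((m + P) * (m + P))))).
      { apply Rmult_le_pos; [apply Rmult_le_pos|]; lra. }
      enough (lam * (r0 - (P - A) + (P - A) * P / (r0 + P)) -
              lam * (r0 - (P - A) + (P - A) * P * (2 / (m + P) - (r0 + P) / ((m + P) * (m + P))))
              = lam * ((P - A) * P) * ((m - r0) * (m - r0) / ((r0 + P) * ((m + P) * (m + P)))))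
        by lra.
      field. lra. }
  destruct (Rle_dec kink r); [apply OnBranch; auto|].
  rewrite pen_profile_zero by lra.
  pose proof (OnBranch kink (Rle_refl _)) as K. rewrite pen_profile_zero in K by lra.
  pose proof (branch_denominator_bound kink kink (Rle_refl _) (Rle_refl _)).
  assert (Hq : (P - A) * P / ((m + P) * (m + P)) <= 1).
  { apply (Rmult_le_reg_r ((m + P) * (m + P))); [nra|]. field_simplify; nra. }
  enough (pen_tangent (m + P) r <= pen_tangent (m + P) kink) by lra.
  assert (0 <= lam * (kink - r) * (1 - (P - A) * P / ((m + P) * (m + P))))
    by (apply Rmult_le_pos; nra).
  enough (pen_tangent (m + P) kink - pen_tangent (m + P) r
          = lam * (kink - r) * (1 - (P - A) * P / ((m + P) * (m + P)))) by lra.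
  unfold pen_tangent. field. lra.
Qed.

Lemma pen_profile_convex s t l : 0 <= l <= 1 ->
  pen_profile lam A P (l * s + (1 - l) * t) <=
  l * pen_profile lam A P s + (1 - l) * pen_profile lam A P t.
Proof.
  intros Hl. set (m := l * s + (1 - l) * t).
  pose proof (pen_profile_nonneg s). pose proof (pen_profile_nonneg t).
  destruct (Rle_dec m kink).
  - rewrite pen_profile_zero by auto. nra.
  - rewrite <- pen_tangent_at by lra.
    pose proof (pen_tangent_le m s ltac:(lra)). pose proof (pen_tangent_le m t ltac:(lra)).
    replace (pen_tangent (m + P) m)
      with (l * pen_tangent (m + P) s + (1 - l) * pen_tangent (m + P) t)
      by (unfold m, pen_tangent, Rdiv; ring).
    nra.
Qed.

Lemma pen_branch_second_diff s h : 0 < h -> kink <= s - h ->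
  pen_branch lam A P (s + h) + pen_branch lam A P (s - h) - 2 * pen_branch lam A P s
  <= 2 * lam * h * h / (s + h + P).
Proof.
  intros Hh Hs. pose proof kink_nonneg.
  destruct (Req_dec P 0) as [Z|Z].
  - subst. unfold pen_branch, Rdiv. rewrite !Rmult_0_r, !Rmult_0_l.
    enough (0 <= 2 * lam * h * h * / (s + h + 0)) by lra.
    apply Rdiv_le_0_compat; [|lra]. repeat apply Rmult_le_pos; lra.
  - pose proof (branch_denominator_bound (s - h) s Hs ltac:(lra)).
    set (X := (P - A) * P / ((s - h + P) * (s + P))).
    assert (HX : X <= 1).
    { unfold X. apply (Rmult_le_reg_r ((s - h + P) * (s + P))); [nra|]. field_simplify; nra. }
    replace (pen_branch lam A P (s + h) + pen_branch lam A P (s - h) - 2 * pen_branch lam A P s)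
      with (2 * lam * h * h * X / (s + h + P)) by (unfold pen_branch, X; field; lra).
    unfold Rdiv. apply Rmult_le_compat_r; [left; apply Rinv_0_lt_compat; lra|].
    assert (0 <= 2 * lam * h * h) by (repeat apply Rmult_le_pos; lra).
    assert (0 <= X) by (unfold X; apply Rdiv_le_0_compat; nra).
    nra.
Qed.

(* A Lorentzian bump of width d: it exceeds 1/2 within distance d of 0 and has integral
   at most pi d, so it dominates the indicator of a neighbourhood of a kink. *)
Definition lorentz (d y : R) : R := d * d / (d * d + y * y).

Lemma lorentz_nonneg d y : 0 < d -> 0 <= lorentz d y.
Proof. intros. unfold lorentz. apply Rdiv_le_0_compat; nra. Qed.

Lemma lorentz_ge_half d y : 0 < d -> Rabs y <= d -> 1 <= 2 * lorentz d y.
Proof.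
  intros Hd Hy. unfold lorentz.
  assert (y * y <= d * d) by (apply Rabs_le_between in Hy; nra).
  apply (Rmult_le_reg_r (d * d + y * y)); [nra|]. field_simplify; nra.
Qed.

Lemma pen_profile_second_diff s h d : 0 < h -> h <= d ->
  pen_profile lam A P (s + h) + pen_profile lam A P (s - h) - 2 * pen_profile lam A P s <=
  lam * h * (2 * lorentz d s + 2 * lorentz d (s + A)) + 2 * lam * h * h / d.
Proof.
  intros Hh Hd. pose proof kink_nonneg.
  pose proof (lorentz_nonneg d s ltac:(lra)). pose proof (lorentz_nonneg d (s + A) ltac:(lra)).
  assert (0 <= 2 * lam * h * h / d)
    by (apply Rdiv_le_0_compat; [repeat apply Rmult_le_pos|]; lra).
  pose proof (pen_profile_increment s (s + h) ltac:(lra)).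
  pose proof (pen_profile_increment (s - h) s ltac:(lra)).
  assert (Crude : pen_profile lam A P (s + h) + pen_profile lam A P (s - h)
                  - 2 * pen_profile lam A P s <= lam * h) by (replace (s + h - s) with h in *; lra).
  destruct (Rle_dec (s + h) kink).
  - rewrite !pen_profile_zero by lra. nra.
  - destruct (Rle_dec kink (s - h)).
    + destruct (Rle_dec d s).
      * rewrite !pen_profile_branch by lra.
        pose proof (pen_branch_second_diff s h Hh ltac:(lra)).
        enough (2 * lam * h * h / (s + h + P) <= 2 * lam * h * h / d) by nra.
        unfold Rdiv. apply Rmult_le_compat_l; [repeat apply Rmult_le_pos; lra|].
        apply Rinv_le_contravar; lra.
      * assert (1 <= 2 * lorentz d s) by (apply lorentz_ge_half; [|apply Rabs_le]; lra).
        nra.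
    + unfold kink, Rmax in *. destruct (Rle_dec 0 (- A)).
      * assert (1 <= 2 * lorentz d (s + A)) by (apply lorentz_ge_half; [|apply Rabs_le]; lra).
        nra.
      * assert (1 <= 2 * lorentz d s) by (apply lorentz_ge_half; [|apply Rabs_le]; lra).
        nra.
Qed.

End PenaltyProfile.

Lemma RInt_lorentz_le Cb d b : 0 < Cb -> 0 < d -> RInt (fun t => lorentz d (b - t)) 0 Cb <= PI * d.
Proof.
  intros HC Hd.
  set (F := fun t => - d * atan ((b - t) / d)).
  assert (DF : forall t, derivable_pt_lim F t (lorentz d (b - t))).
  { intros t. set (f1 := fun t => (b - t) * / d).
    assert (D1 : derivable_pt_lim f1 t (- / d)).
    { apply is_derive_Reals. unfold f1. auto_derive; auto. ring. }
    pose proof (derivable_pt_lim_scal _ (- d) t _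
                  (derivable_pt_lim_comp f1 atan t _ _ D1 (derivable_pt_lim_atan (f1 t)))) as X.
    replace (lorentz d (b - t)) with (- d * (/ (1 + f1 t ^ 2) * - / d)); [exact X|].
    unfold lorentz, f1. field. split; apply Rgt_not_eq; [|lra].
    apply Rplus_lt_le_0_compat; [apply Rmult_lt_0_compat; lra|apply Rle_0_sqr]. }
  assert (Hi : is_RInt (fun t => lorentz d (b - t)) 0 Cb (minus (F Cb) (F 0))).
  { apply (@is_RInt_derive R_CompleteNormedModule F).
    - intros x _. apply is_derive_Reals, DF.
    - intros x _. apply (@ex_derive_continuous R_AbsRing R_NormedModule). unfold lorentz.
      auto_derive. apply Rgt_not_eq, Rplus_lt_le_0_compat; [apply Rmult_lt_0_compat; lra|].
      apply Rle_0_sqr. }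
  rewrite (is_RInt_unique _ _ _ _ Hi). unfold minus, plus, opp, F. simpl.
  destruct (atan_bound ((b - Cb) / d)), (atan_bound ((b - 0) / d)).
  assert (d * atan ((b - 0) / d) <= d * (PI / 2)) by (apply Rmult_le_compat_l; lra).
  assert (- (d * atan ((b - Cb) / d)) <= d * (PI / 2)) by nra.
  lra.
Qed.

Lemma cont_at_cube_lorentz M Cb d G z : 0 < d ->
  cont_at_cube M Cb G z -> cont_at_cube M Cb (fun w => lorentz d (G w)) z.
Proof.
  intros Hd HG. unfold lorentz.
  apply cont_at_cube_div; [apply cont_at_cube_const| |].
  - apply cont_at_cube_plus; [apply cont_at_cube_const|apply cont_at_cube_mult; auto].
  - apply Rgt_not_eq, Rplus_lt_le_0_compat; [apply Rmult_lt_0_compat; lra|apply Rle_0_sqr].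
Qed.

Section LorentzIntegrals.

Variables (N : nat) (Cb d : R).
Hypotheses (HC : 0 < Cb) (Hd : 0 < d).

Lemma cube_int_lorentz_coord i t : (i < N)%nat ->
  cube_int N Cb (fun c => lorentz d (t - c i)) <= Cb ^ (N - 1) * (PI * d).
Proof.
  intros Hi. apply cube_int_le_of_slice with (m := i); auto.
  - apply ucont_cube_of_cont; auto. intros z _. apply cont_at_cube_lorentz; auto.
    apply cont_at_cube_minus; [apply cont_at_cube_const|apply cont_at_cube_coord; auto].
  - intros c j s Hj. rewrite upd_other by lia. reflexivity.
  - intros c _. rewrite (RInt_ext _ (fun s => lorentz d (t - s))); [apply RInt_lorentz_le; auto|].
    intros s _. rewrite upd_same. reflexivity.
Qed.

Lemma cube_int_lorentz_sum a : (0 < N)%nat ->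
  cube_int N Cb (fun c => lorentz d (a - rsum N c)) <= Cb ^ (N - 1) * (PI * d).
Proof.
  intros HN. apply cube_int_le_of_slice with (m := 0%nat); auto; [| intros; lia |].
  - apply ucont_cube_of_cont; auto. intros z _. apply cont_at_cube_lorentz; auto.
    apply cont_at_cube_minus; [apply cont_at_cube_const|].
    apply cont_at_cube_rsum. intros j Hj. apply cont_at_cube_coord; auto.
  - intros c _.
    rewrite (RInt_ext _ (fun s => lorentz d ((a - rsum N c + c 0%nat) - s)));
      [apply RInt_lorentz_le; auto|].
    intros s _. rewrite rsum_upd by auto. f_equal. ring.
Qed.

End LorentzIntegrals.


(** * Convex functions with small second differences *)

Lemma continuity_pt_delta f x eps : continuity_pt f x -> 0 < eps ->
  exists del, 0 < del /\ forall y, Rabs (y - x) < del -> Rabs (f y - f x) < eps.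
Proof.
  intros Hf He. destruct (Hf eps He) as [del [Hdel K]]. exists del. split; auto.
  intros y Hy. destruct (Req_dec y x) as [->|Ne].
  - rewrite Rminus_eq_0, Rabs_R0. auto.
  - apply (K y). split; [split; [exact I|auto]|exact Hy].
Qed.

Definition chord_slope (g : R -> R) (a b : R) : R := (g b - g a) / (b - a).

Section ConvexChords.

Variables (g : R -> R) (C : R).
Hypothesis Hconv : convex_on g 0 C.

Lemma chord_slope_three a m b : 0 <= a -> a < m -> m < b -> b <= C ->
  chord_slope g a m <= chord_slope g a b /\ chord_slope g a b <= chord_slope g m b.
Proof.
  intros Ha Ham Hmb Hb.
  set (l := (b - m) / (b - a)).
  assert (Hl : 0 <= l <= 1).
  { unfold l. split; [apply Rdiv_le_0_compat; lra|].
    apply (Rmult_le_reg_r (b - a)); [lra|]. field_simplify; lra. }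
  assert (K := Hconv a b l ltac:(lra) ltac:(lra) Hl).
  replace (l * a + (1 - l) * b) with m in K by (unfold l; field; lra).
  assert (E1 : 1 - l = (m - a) / (b - a)) by (unfold l; field; lra).
  unfold chord_slope. split.
  - apply (Rmult_le_reg_r (m - a)); [lra|].
    replace ((g m - g a) / (m - a) * (m - a)) with (g m - g a) by (field; lra).
    replace ((g b - g a) / (b - a) * (m - a)) with ((1 - l) * (g b - g a))
      by (rewrite E1; field; lra).
    nra.
  - apply (Rmult_le_reg_r (b - m)); [lra|].
    replace ((g b - g m) / (b - m) * (b - m)) with (g b - g m) by (field; lra).
    replace ((g b - g a) / (b - a) * (b - m)) with (l * (g b - g a)) by (unfold l; field; lra).
    nra.
Qed.

Lemma chord_slope_le a b c d : 0 <= a -> a < b -> b <= c -> c < d -> d <= C ->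
  chord_slope g a b <= chord_slope g c d.
Proof.
  intros Ha Hab Hbc Hcd Hd.
  destruct (Rle_lt_or_eq_dec _ _ Hbc) as [L|<-].
  - destruct (chord_slope_three a b d); try lra.
    destruct (chord_slope_three b c d); lra.
  - destruct (chord_slope_three a b d); lra.
Qed.

Lemma chord_slope_mono_r a b b' : 0 <= a -> a < b -> b <= b' -> b' <= C ->
  chord_slope g a b <= chord_slope g a b'.
Proof.
  intros H1 H2 H3 H4. destruct (Rle_lt_or_eq_dec _ _ H3) as [L|<-]; [|lra].
  destruct (chord_slope_three a b b'); lra.
Qed.

Lemma chord_slope_mono_l a a' b : 0 <= a -> a <= a' -> a' < b -> b <= C ->
  chord_slope g a b <= chord_slope g a' b.
Proof.
  intros H1 H2 H3 H4. destruct (Rle_lt_or_eq_dec _ _ H2) as [L|<-]; [|lra].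
  destruct (chord_slope_three a a' b); lra.
Qed.

(* The left difference quotients increase to a limit l bounded by every right quotient;
   a small symmetric second difference forces the right quotients down to l as well. *)
Lemma convex_derivable (t : R) : 0 < t < C ->
  (forall eps, 0 < eps -> exists eta, 0 < eta /\ forall h, 0 < h < eta ->
     0 <= t - h -> t + h <= C -> g (t + h) + g (t - h) - 2 * g t <= eps * h) ->
  exists l, derivable_pt_lim g t l.
Proof.
  intros Ht Hd.
  set (E := fun y => exists h, 0 < h <= t /\ y = chord_slope g (t - h) t).
  destruct (completeness E) as [l [Ub Lub]].
  { exists (chord_slope g t C). intros y [h [Hh ->]]. apply chord_slope_le; lra. }
  { exists (chord_slope g 0 t). exists t. split; [lra|].
    unfold chord_slope. rewrite Rminus_eq_0. reflexivity. }
  assert (Right : forall h, 0 < h -> t + h <= C -> l <= chord_slope g t (t + h)).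
  { intros h H1 H2. apply Lub. intros y [k [Hk ->]]. apply chord_slope_le; lra. }
  assert (Left : forall h, 0 < h <= t -> chord_slope g (t - h) t <= l).
  { intros h H1. apply Ub. exists h. auto. }
  exists l. intros eps He.
  destruct (Hd (eps / 2) ltac:(lra)) as [eta [Heta K]].
  set (del := Rmin eta (Rmin t (C - t))).
  assert (Hdel : 0 < del) by (unfold del; repeat apply Rmin_pos; lra).
  assert (del <= eta /\ del <= t /\ del <= C - t) as [Hd1 [Hd2 Hd3]]
    by (unfold del; repeat split;
        repeat (apply Rmin_l || (eapply Rle_trans; [apply Rmin_r|]) || apply Rle_refl)).
  assert (Gap : forall h, 0 < h < del ->
            chord_slope g t (t + h) - chord_slope g (t - h) t <= eps / 2).
  { intros h Hh. unfold chord_slope.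
    replace (t + h - t) with h by ring. replace (t - (t - h)) with h by ring.
    pose proof (K h ltac:(lra) ltac:(lra) ltac:(lra)).
    apply (Rmult_le_reg_r h); [lra|]. field_simplify; lra. }
  exists (mkposreal del Hdel). intros h Hh0 Hh. simpl in Hh.
  apply Rabs_def2 in Hh.
  destruct (Rlt_or_le 0 h) as [P|N].
  - replace ((g (t + h) - g t) / h) with (chord_slope g t (t + h))
      by (unfold chord_slope; f_equal; ring).
    pose proof (Right h P ltac:(lra)). pose proof (Left h ltac:(lra)).
    pose proof (Gap h ltac:(lra)). apply Rabs_def1; lra.
  - assert (N' : h < 0) by lra.
    replace ((g (t + h) - g t) / h) with (chord_slope g (t - - h) t)
      by (unfold chord_slope; replace (t - - h) with (t + h) by ring; field; lra).
    pose proof (Right (- h) ltac:(lra) ltac:(lra)). pose proof (Left (- h) ltac:(lra)).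
    pose proof (Gap (- h) ltac:(lra)). apply Rabs_def1; lra.
Qed.

Variable g' : R -> R.
Hypothesis Hder : forall t, 0 < t < C -> derivable_pt_lim g t (g' t).

Lemma deriv_le_chord_slope s t : 0 < s -> s < t -> t < C ->
  g' s <= chord_slope g s t <= g' t.
Proof.
  intros Hs Hst Ht. split.
  - apply Rnot_lt_le. intros Hlt.
    destruct (Hder s ltac:(lra) (g' s - chord_slope g s t) ltac:(lra)) as [[del Hdel] K].
    set (h := Rmin (del / 2) (t - s)).
    assert (0 < h /\ h <= del / 2 /\ h <= t - s) as [Hh [Hh1 Hh2]]
      by (unfold h; repeat split; [apply Rmin_pos; lra|apply Rmin_l|apply Rmin_r]).
    specialize (K h ltac:(lra) ltac:(simpl; rewrite Rabs_right; lra)).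
    replace ((g (s + h) - g s) / h) with (chord_slope g s (s + h)) in K
      by (unfold chord_slope; f_equal; ring).
    pose proof (chord_slope_mono_r s (s + h) t ltac:(lra) ltac:(lra) ltac:(lra) ltac:(lra)).
    apply Rabs_def2 in K. lra.
  - apply Rnot_lt_le. intros Hlt.
    destruct (Hder t ltac:(lra) (chord_slope g s t - g' t) ltac:(lra)) as [[del Hdel] K].
    set (h := Rmin (del / 2) (t - s)).
    assert (0 < h /\ h <= del / 2 /\ h <= t - s) as [Hh [Hh1 Hh2]]
      by (unfold h; repeat split; [apply Rmin_pos; lra|apply Rmin_l|apply Rmin_r]).
    specialize (K (- h) ltac:(lra) ltac:(simpl; rewrite Rabs_left; lra)).
    replace ((g (t + - h) - g t) / - h) with (chord_slope g (t - h) t) in K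
      by (unfold chord_slope; replace (t + - h) with (t - h) by ring; field; lra).
    pose proof (chord_slope_mono_l s (t - h) t ltac:(lra) ltac:(lra) ltac:(lra) ltac:(lra)).
    apply Rabs_def2 in K. lra.
Qed.

Lemma deriv_nondecreasing s t : 0 < s -> s <= t -> t < C -> g' s <= g' t.
Proof.
  intros Hs Hst Ht. destruct (Rle_lt_or_eq_dec _ _ Hst) as [L|<-]; [|lra].
  destruct (deriv_le_chord_slope s t); lra.
Qed.

(* Squeeze g' t between g' t0 and a chord slope from t to a point b near t0; the chord
   slope depends continuously on t. *)
Lemma deriv_cont_interior t0 : 0 < t0 < C -> forall eps, 0 < eps -> exists eta, 0 < eta /\
  forall t, 0 < t < C -> Rabs (t - t0) < eta -> Rabs (g' t - g' t0) < eps.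
Proof.
  intros Ht0 eps He.
  assert (Cg : continuity_pt g t0)
    by (apply derivable_continuous_pt; exists (g' t0); apply Hder; auto).
  destruct (Hder t0 Ht0 (eps / 2) ltac:(lra)) as [[d Hd] K].
  set (h := Rmin (d / 2) (Rmin (t0 / 2) ((C - t0) / 2))).
  assert (0 < h /\ h < d /\ h <= t0 / 2 /\ h <= (C - t0) / 2) as [Hh [Hh1 [Hh2 Hh3]]].
  { unfold h. repeat split; [repeat apply Rmin_pos; lra| | |].
    - eapply Rle_lt_trans; [apply Rmin_l|lra].
    - eapply Rle_trans; [apply Rmin_r|apply Rmin_l].
    - eapply Rle_trans; [apply Rmin_r|apply Rmin_r]. }
  set (a := t0 - h). set (b := t0 + h).
  assert (Sb : chord_slope g t0 b < g' t0 + eps / 2).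
  { pose proof (K h ltac:(lra) ltac:(simpl; rewrite Rabs_right; lra)) as Kh.
    replace ((g (t0 + h) - g t0) / h) with (chord_slope g t0 b) in Kh
      by (unfold chord_slope, b; f_equal; ring).
    apply Rabs_def2 in Kh. lra. }
  assert (Sa : g' t0 - eps / 2 < chord_slope g a t0).
  { pose proof (K (- h) ltac:(lra) ltac:(simpl; rewrite Rabs_left; lra)) as Kh.
    replace ((g (t0 + - h) - g t0) / - h) with (chord_slope g a t0) in Kh
      by (unfold chord_slope, a; replace (t0 + - h) with (t0 - h) by ring; field; lra).
    apply Rabs_def2 in Kh. lra. }
  assert (Cb : continuity_pt (fun t => chord_slope g t b) t0).
  { apply continuity_pt_div; [apply continuity_pt_minus; [apply continuity_pt_const|]|..].
    - intros x y; auto.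
    - exact Cg.
    - apply continuity_pt_minus; [|apply continuity_pt_id].
      apply continuity_pt_const. intros x y; auto.
    - unfold b. lra. }
  assert (Ca : continuity_pt (fun t => chord_slope g a t) t0).
  { apply continuity_pt_div; [apply continuity_pt_minus; [|apply continuity_pt_const]|..].
    - exact Cg.
    - intros x y; auto.
    - apply continuity_pt_minus; [apply continuity_pt_id|].
      apply continuity_pt_const. intros x y; auto.
    - unfold a. lra. }
  destruct (continuity_pt_delta _ _ (eps / 2) Cb ltac:(lra)) as [db [Hdb Kb]].
  destruct (continuity_pt_delta _ _ (eps / 2) Ca ltac:(lra)) as [da [Hda Ka]].
  exists (Rmin h (Rmin da db)). split; [repeat apply Rmin_pos; lra|].
  intros t Ht Htt.
  assert (Rabs (t - t0) < h /\ Rabs (t - t0) < da /\ Rabs (t - t0) < db) as [T1 [T2 T3]].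
  { repeat split; eapply Rlt_le_trans; try apply Htt;
      repeat (apply Rmin_l || (eapply Rle_trans; [apply Rmin_r|]) || apply Rle_refl). }
  pose proof (Rabs_def2 _ _ T1).
  destruct (Rtotal_order t t0) as [Lt|[->|Gt]].
  - pose proof (deriv_nondecreasing t t0 ltac:(lra) ltac:(lra) ltac:(lra)).
    pose proof (deriv_le_chord_slope a t ltac:(unfold a; lra) ltac:(unfold a; lra) ltac:(lra)).
    pose proof (Rabs_def2 _ _ (Ka t T2)). apply Rabs_def1; lra.
  - rewrite Rminus_eq_0, Rabs_R0. lra.
  - pose proof (deriv_nondecreasing t0 t ltac:(lra) ltac:(lra) ltac:(lra)).
    pose proof (deriv_le_chord_slope t b ltac:(lra) ltac:(unfold b; lra) ltac:(unfold b; lra)).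
    pose proof (Rabs_def2 _ _ (Kb t T3)). apply Rabs_def1; lra.
Qed.

End ConvexChords.

Lemma sup_on_interval G a b hi : a < b -> (forall t, a < t < b -> G t <= hi) ->
  exists mu, (forall t, a < t < b -> G t <= mu) /\
             forall eps, 0 < eps -> exists t1, a < t1 < b /\ mu - eps < G t1.
Proof.
  intros Hab Hhi.
  destruct (completeness (fun y => exists t, a < t < b /\ y = G t)) as [mu [Ub Lub]].
  - exists hi. intros y [t [Ht ->]]. auto.
  - exists (G ((a + b) / 2)). exists ((a + b) / 2). split; [lra|auto].
  - exists mu. split; [intros t Ht; apply Ub; eauto|].
    intros eps He. apply NNPP. intros Hn.
    enough (mu <= mu - eps) by lra. apply Lub. intros y [t [Ht ->]].
    apply Rnot_lt_le. intros Q. apply Hn. eauto.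
Qed.

Lemma nondecreasing_cont_extension G a b lo hi : a < b ->
  (forall s t, a < s -> s <= t -> t < b -> G s <= G t) ->
  (forall t, a < t < b -> lo <= G t <= hi) ->
  (forall t0, a < t0 < b -> forall eps, 0 < eps -> exists eta, 0 < eta /\
     forall t, a < t < b -> Rabs (t - t0) < eta -> Rabs (G t - G t0) < eps) ->
  exists G', (forall t, a < t < b -> G' t = G t) /\ cont_on_interval G' a b.
Proof.
  intros Hab Mono Bnd Cont.
  destruct (sup_on_interval G a b hi Hab) as [mu [Umu Amu]]; [intros t Ht; apply Bnd; auto|].
  destruct (sup_on_interval (fun t => - G t) a b (- lo) Hab) as [ml [Uml Aml]];
    [intros t Ht; specialize (Bnd t Ht); lra|].
  set (G' := fun t => if Rle_dec t a then - ml else if Rle_dec b t then mu else G t).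
  assert (Gi : forall t, a < t < b -> G' t = G t).
  { intros t Ht. unfold G'. destruct (Rle_dec t a); [lra|]. destruct (Rle_dec b t); [lra|auto]. }
  assert (Ga : G' a = - ml) by (unfold G'; destruct (Rle_dec a a); lra).
  assert (Gb : G' b = mu)
    by (unfold G'; destruct (Rle_dec b a); [lra|]; destruct (Rle_dec b b); lra).
  exists G'. split; auto. intros s Hs e He.
  destruct (Rle_lt_or_eq_dec _ _ (proj1 Hs)) as [Hs0 | <-];
    [destruct (Rle_lt_or_eq_dec _ _ (proj2 Hs)) as [Hs1 | ->]|].
  - destruct (Cont s (conj Hs0 Hs1) e He) as [eta [Heta K]].
    exists (Rmin eta (Rmin (s - a) (b - s))). split; [repeat apply Rmin_pos; lra|].
    intros t Ht Hts.
    assert (Rabs (t - s) < eta /\ Rabs (t - s) < s - a /\ Rabs (t - s) < b - s) as [T1 [T2 T3]].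
    { repeat split; eapply Rlt_le_trans; try apply Hts;
        repeat (apply Rmin_l || (eapply Rle_trans; [apply Rmin_r|]) || apply Rle_refl). }
    apply Rabs_def2 in T2. apply Rabs_def2 in T3.
    rewrite !Gi by lra. apply K; auto; lra.
  - destruct (Amu e He) as [t1 [Ht1 F]].
    exists (b - t1). split; [lra|]. intros t Ht Hts. apply Rabs_def2 in Hts.
    rewrite Gb. destruct (Rle_lt_or_eq_dec _ _ (proj2 Ht)) as [Lt| ->].
    + rewrite Gi by lra. pose proof (Mono t1 t ltac:(lra) ltac:(lra) Lt).
      pose proof (Umu t ltac:(lra)). apply Rabs_def1; lra.
    + rewrite Gb, Rminus_eq_0, Rabs_R0; lra.
  - destruct (Aml e He) as [t1 [Ht1 F]].
    exists (t1 - a). split; [lra|]. intros t Ht Hts. apply Rabs_def2 in Hts.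
    rewrite Ga. destruct (Rle_lt_or_eq_dec _ _ (proj1 Ht)) as [Lt| <-].
    + rewrite Gi by lra. pose proof (Mono t t1 Lt ltac:(lra) ltac:(lra)).
      pose proof (Uml t ltac:(lra)). apply Rabs_def1; lra.
    + rewrite Ga, Rminus_eq_0, Rabs_R0; lra.
Qed.

Lemma cont_on_interval_of_lipschitz g a b L :
  (forall s t, a <= s -> s <= t -> t <= b -> 0 <= g t - g s <= L * (t - s)) ->
  cont_on_interval g a b.
Proof.
  intros HM s Hs e He.
  assert (Abs : forall t, a <= t <= b -> Rabs (g t - g s) <= L * Rabs (t - s)).
  { intros t Ht. destruct (Rle_dec s t).
    - destruct (HM s t); try lra. rewrite !Rabs_right; lra.
    - destruct (HM t s); try lra. rewrite Rabs_left1, Rabs_left by lra. lra. }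
  destruct (Rle_lt_dec L 0) as [HL|HL].
  - exists 1. split; [lra|]. intros t Ht _. pose proof (Abs t Ht). pose proof (Rabs_pos (t - s)).
    nra.
  - exists (e / L). split; [apply Rdiv_lt_0_compat; lra|]. intros t Ht Hts.
    eapply Rle_lt_trans; [apply Abs; auto|].
    apply (Rmult_lt_compat_l L) in Hts; auto. replace (L * (e / L)) with e in Hts by (field; lra).
    auto.
Qed.

Theorem C1_on_of_convex g C L : 0 < C -> convex_on g 0 C ->
  (forall s t, 0 <= s -> s <= t -> t <= C -> 0 <= g t - g s <= L * (t - s)) ->
  (forall t, 0 < t < C -> forall eps, 0 < eps -> exists eta, 0 < eta /\ forall h, 0 < h < eta ->
     0 <= t - h -> t + h <= C -> g (t + h) + g (t - h) - 2 * g t <= eps * h) ->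
  C1_on g 0 C.
Proof.
  intros HC Hconv HM H2.
  set (g' := fun t => epsilon (inhabits 0) (fun l => derivable_pt_lim g t l)).
  assert (Hder : forall t, 0 < t < C -> derivable_pt_lim g t (g' t)).
  { intros t Ht. apply epsilon_spec, (convex_derivable g C); auto. }
  assert (Bnd : forall t, 0 < t < C -> 0 <= g' t <= L).
  { intros t Ht. split.
    - destruct (deriv_le_chord_slope g C Hconv g' Hder (t / 2) t); try lra.
      destruct (HM (t / 2) t); try lra.
      enough (0 <= chord_slope g (t / 2) t) by lra. apply Rdiv_le_0_compat; lra.
    - destruct (deriv_le_chord_slope g C Hconv g' Hder t ((t + C) / 2)); try lra.
      destruct (HM t ((t + C) / 2)); try lra.
      enough (chord_slope g t ((t + C) / 2) <= L) by lra. unfold chord_slope.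
      apply (Rmult_le_reg_r ((t + C) / 2 - t)); [lra|]. field_simplify; lra. }
  split; [apply (cont_on_interval_of_lipschitz g 0 C L HM)|].
  destruct (nondecreasing_cont_extension g' 0 C 0 L HC) as [G [HG CG]].
  - intros s t Hs Hst Ht. apply (deriv_nondecreasing g C Hconv g' Hder); auto.
  - exact Bnd.
  - apply (deriv_cont_interior g C Hconv g' Hder).
  - exists G. split; auto. intros t Ht. rewrite HG; auto.
Qed.

(** * Expected penalty and payoff *)

(* Offers and capacities as one point of the 2N-cube (c first, then x), so that joint
   uniform continuity in (x, c) comes from Heine's theorem. *)
Definition pair_pt (N : nat) (x c : nat -> R) : nat -> R :=
  fun j => if Nat.ltb j N then c j else x (j - N)%nat.

Definition offers_of (N : nat) (z : nat -> R) : nat -> R := fun j => z (N + j)%nat.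

Lemma pair_pt_lo N x c j : (j < N)%nat -> pair_pt N x c j = c j.
Proof. intros. unfold pair_pt. destruct (Nat.ltb_spec j N); [auto|lia]. Qed.

Lemma pair_pt_hi N x c j : pair_pt N x c (N + j)%nat = x j.
Proof. unfold pair_pt. destruct (Nat.ltb_spec (N + j) N); [lia|]. f_equal. lia. Qed.

Lemma pair_pt_in_cube N Cb x c : in_cube N Cb x -> in_cube N Cb c ->
  in_cube (N + N) Cb (pair_pt N x c).
Proof.
  intros Hx Hc j Hj. unfold pair_pt. destruct (Nat.ltb_spec j N); [apply Hc|apply Hx]; lia.
Qed.

Lemma pair_pt_close N Cb G : ucont_cube (N + N) Cb G -> forall e, 0 < e -> exists d, 0 < d /\
  forall x y c, in_cube N Cb x -> in_cube N Cb y -> in_cube N Cb c ->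
    (forall j, (j < N)%nat -> Rabs (y j - x j) < d) ->
    Rabs (G (pair_pt N y c) - G (pair_pt N x c)) < e.
Proof.
  intros H e He. destruct (H e He) as [d [Hd K]]. exists d. split; auto.
  intros x y c Hx Hy Hc Cl. apply K; try apply pair_pt_in_cube; auto.
  intros j Hj. unfold pair_pt. destruct (Nat.ltb_spec j N).
  - rewrite Rminus_eq_0, Rabs_R0; auto.
  - apply Cl; lia.
Qed.

Lemma ucont_cube_pair_pt N Cb G x : ucont_cube (N + N) Cb G -> in_cube N Cb x ->
  ucont_cube N Cb (fun c => G (pair_pt N x c)).
Proof.
  intros H Hx e He. destruct (H e He) as [d [Hd K]]. exists d. split; auto.
  intros c c' Hc Hc' Cl. apply K; try apply pair_pt_in_cube; auto.
  intros j Hj. unfold pair_pt. destruct (Nat.ltb_spec j N).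
  - apply Cl; auto.
  - rewrite Rminus_eq_0, Rabs_R0; auto.
Qed.

Lemma ucont_cube_of_pair N Cb F G x : ucont_cube (N + N) Cb G ->
  (forall x c, in_cube N Cb x -> in_cube N Cb c -> G (pair_pt N x c) = F x c) ->
  in_cube N Cb x -> ucont_cube N Cb (F x).
Proof.
  intros UG FG Hx.
  apply (ucont_cube_ext N Cb (fun c => G (pair_pt N x c))); [intros; apply FG; auto|].
  apply ucont_cube_pair_pt; auto.
Qed.

Lemma cube_int_param_cont N Cb F G : 0 < Cb -> ucont_cube (N + N) Cb G ->
  (forall x c, in_cube N Cb x -> in_cube N Cb c -> G (pair_pt N x c) = F x c) ->
  forall eps, 0 < eps -> exists del, 0 < del /\ forall x y, in_cube N Cb x -> in_cube N Cb y ->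
    (forall j, (j < N)%nat -> Rabs (y j - x j) < del) ->
    Rabs (cube_int N Cb (F y) - cube_int N Cb (F x)) < eps.
Proof.
  intros HC UG FG eps Heps.
  assert (Hpow : 0 < Cb ^ N) by (apply pow_lt; lra).
  set (e := eps / (2 * (Cb ^ N + 1))).
  assert (He : 0 < e) by (apply Rdiv_lt_0_compat; lra).
  destruct (pair_pt_close N Cb G UG e He) as [d [Hd K]].
  exists d. split; auto. intros x y Hx Hy Cl.
  eapply Rle_lt_trans; [apply (cube_int_dist N Cb HC _ _ e);
                        [apply (ucont_cube_of_pair N Cb F G); auto..|]|].
  - intros c Hc. rewrite <- !FG by auto. left. apply K; auto.
  - enough (Cb ^ N * e = eps / 2 - e) by lra. unfold e. field. lra.
Qed.

Section Penalty.

Variables (lam : R) (N i : nat).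
Hypotheses (Hlam : 0 < lam) (Hi : (i < N)%nat).

Lemma phi_ext x x' c c' : (forall j, (j < N)%nat -> x j = x' j) ->
  (forall j, (j < N)%nat -> c j = c' j) -> phi lam N i x c = phi lam N i x' c'.
Proof.
  intros Ex Ec. unfold phi.
  rewrite (rsum_ext N (fun j => Rmax (x j - c j) 0) (fun j => Rmax (x' j - c' j) 0))
    by (intros j Hj; rewrite Ex, Ec by auto; auto).
  rewrite (rsum_ext N x x'), (rsum_ext N c c'), (Ex i Hi), (Ec i Hi) by auto. reflexivity.
Qed.

Lemma phi_bounds x c : 0 <= phi lam N i x c <= lam * rsum N (fun j => Rmax (x j - c j) 0).
Proof.
  set (D := rsum N (fun j => Rmax (x j - c j) 0)).
  assert (TD : Rmax (rsum N x - rsum N c) 0 <= D).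
  { unfold D. rewrite <- rsum_minus. apply Rmax_lub.
    - apply rsum_le. intros j _. apply Rmax_l.
    - apply rsum_nonneg. intros; apply Rmax_r. }
  assert (AD : Rmax (x i - c i) 0 <= D).
  { unfold D. rewrite (rsum_split N _ i Hi).
    enough (0 <= rsum N (fun j => if Nat.eqb j i then 0 else Rmax (x j - c j) 0)) by lra.
    apply rsum_nonneg. intros j _. destruct (Nat.eqb j i); [lra|apply Rmax_r]. }
  pose proof (Rmax_r (rsum N x - rsum N c) 0). pose proof (Rmax_r (x i - c i) 0).
  unfold phi. fold D. destruct Req_EM_T as [E|E]; [rewrite E; lra|].
  split; [apply Rdiv_le_0_compat; [repeat apply Rmult_le_pos|]; lra|].
  assert (Rmax (rsum N x - rsum N c) 0 * Rmax (x i - c i) 0 <= D * D) by nra.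
  apply (Rmult_le_reg_r D); [lra|]. field_simplify; [|lra]. nra.
Qed.

(* Away from the zero set of the denominator phi is a quotient of continuous functions;
   on it, phi is squeezed to 0 by phi_bounds. *)
Lemma cont_at_cube_phi_pair Cb z :
  cont_at_cube (N + N) Cb (fun w => phi lam N i (offers_of N w) w) z.
Proof.
  set (D := fun w : nat -> R => rsum N (fun j => Rmax (w (N + j)%nat - w j) 0)).
  assert (CD : cont_at_cube (N + N) Cb D z).
  { apply cont_at_cube_rsum. intros j Hj.
    apply cont_at_cube_Rmax; [|apply cont_at_cube_const].
    apply cont_at_cube_minus; apply cont_at_cube_coord; lia. }
  destruct (Req_dec (D z) 0) as [Z|Z].
  - intros e He. destruct (CD (e / lam)) as [d [Hd K]]; [apply Rdiv_lt_0_compat; lra|].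
    exists d. split; auto. intros z' Hz' Cl. specialize (K z' Hz' Cl).
    pose proof (phi_bounds (offers_of N z') z') as B1.
    pose proof (phi_bounds (offers_of N z) z) as B2.
    change (rsum N (fun j => Rmax (offers_of N z j - z j) 0)) with (D z) in B2.
    change (rsum N (fun j => Rmax (offers_of N z' j - z' j) 0)) with (D z') in B1.
    rewrite Z in B2, K. rewrite Rminus_0_r in K.
    replace (phi lam N i (offers_of N z) z) with 0 by lra. rewrite Rminus_0_r.
    apply Rabs_def2 in K. destruct K as [K _].
    apply (Rmult_lt_compat_l lam) in K; auto.
    replace (lam * (e / lam)) with e in K by (field; lra).
    rewrite Rabs_right; lra.
  - apply (cont_at_cube_ext _ _ _
      (fun w => lam * Rmax (rsum N (fun j => w (N + j)%nat) - rsum N w) 0 *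
                Rmax (w (N + i)%nat - w i) 0 / D w)).
    { intros w. unfold phi. cbv zeta. destruct Req_EM_T as [E|E]; [|reflexivity].
      change (D w = 0) in E. rewrite E. unfold Rdiv. rewrite Rinv_0. ring. }
    apply cont_at_cube_div; auto. apply cont_at_cube_mult; [apply cont_at_cube_scal|];
      (apply cont_at_cube_Rmax; [|apply cont_at_cube_const]; apply cont_at_cube_minus).
    + apply cont_at_cube_rsum. intros j Hj. apply cont_at_cube_coord. lia.
    + apply cont_at_cube_rsum. intros j Hj. apply cont_at_cube_coord. lia.
    + apply cont_at_cube_coord. lia.
    + apply cont_at_cube_coord. lia.
Qed.

Definition excess_others (x c : nat -> R) : R :=
  rsum N (fun j => if Nat.eqb j i then 0 else x j - c j).
Definition pos_excess_others (x c : nat -> R) : R :=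
  rsum N (fun j => if Nat.eqb j i then 0 else Rmax (x j - c j) 0).

Lemma excess_others_le x c : excess_others x c <= pos_excess_others x c.
Proof. apply rsum_le. intros j _. destruct (Nat.eqb j i); [lra|apply Rmax_l]. Qed.

Lemma pos_excess_others_nonneg x c : 0 <= pos_excess_others x c.
Proof. apply rsum_nonneg. intros j _. destruct (Nat.eqb j i); [lra|apply Rmax_r]. Qed.

Lemma rsum_upd_minus x c r :
  rsum N (upd x i r) - rsum N c = excess_others x c + (r - c i).
Proof.
  rewrite <- rsum_minus, (rsum_split N _ i Hi), upd_same.
  unfold excess_others. f_equal. apply rsum_ext. intros j _.
  destruct (Nat.eqb_spec j i); auto. rewrite upd_other; auto.
Qed.

Lemma phi_upd x c r :
  phi lam N i (upd x i r) c = pen_profile lam (excess_others x c) (pos_excess_others x c) (r - c i).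
Proof.
  assert (HD : rsum N (fun j => Rmax (upd x i r j - c j) 0)
               = pos_excess_others x c + Rmax (r - c i) 0).
  { rewrite (rsum_split N _ i Hi), upd_same. unfold pos_excess_others. f_equal. apply rsum_ext.
    intros j _. destruct (Nat.eqb_spec j i); auto. rewrite upd_other; auto. }
  unfold phi, pen_profile. cbv zeta. rewrite HD, rsum_upd_minus, upd_same. reflexivity.
Qed.

End Penalty.

Section Model.

Variables (N : nat) (Cbar lam : R) (f : (nat -> R) -> R) (u : R -> R) (d0 : R) (i : nat).
Hypotheses (HC : 0 < Cbar) (Hlam : 0 < lam) (Hi : (i < N)%nat).
Hypotheses (Hf_cont : cont_on_cube N Cbar f) (Hf_pos : forall c, in_cube N Cbar c -> 0 < f c).

Definition pen_density (x c : nat -> R) : R := phi lam N i x c * f c.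
Definition pay_density (x c : nat -> R) : R := (u (d0 + c i - x i) - phi lam N i x c) * f c.

Lemma ExpPen_cube_int x : ExpPen lam N Cbar f i x = cube_int N Cbar (pen_density x).
Proof. reflexivity. Qed.

Lemma payoff_cube_int x rho :
  payoff lam N Cbar f u d0 i x rho = rho * x i + cube_int N Cbar (pay_density x).
Proof. reflexivity. Qed.

Lemma density_ext c c' : in_cube N Cbar c -> in_cube N Cbar c' ->
  (forall j, (j < N)%nat -> c j = c' j) -> f c = f c'.
Proof.
  intros Hc Hc' E. destruct (Req_dec (f c') (f c)) as [Q|Q]; [auto|exfalso].
  assert (P0 : 0 < Rabs (f c' - f c)) by (apply Rabs_pos_lt; lra).
  destruct (Hf_cont c Hc _ P0) as [d [Hd K]].
  enough (Rabs (f c' - f c) < Rabs (f c' - f c)) by lra.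
  apply K; auto. intros j Hj. rewrite E, Rminus_eq_0, Rabs_R0 by auto. auto.
Qed.

Lemma density_ucont : ucont_cube N Cbar f.
Proof. apply ucont_cube_of_cont; auto. Qed.

Lemma density_bound : exists B, 0 <= B /\ forall c, in_cube N Cbar c -> f c <= B.
Proof.
  destruct (ucont_cube_bounded N Cbar f HC density_ucont) as [B HB]. exists B. split.
  - pose proof (HB _ (in_cube_zero N Cbar ltac:(lra))). pose proof (Rabs_pos (f (fun _ => 0))). lra.
  - intros c Hc. specialize (HB c Hc). apply Rabs_le_between in HB. lra.
Qed.

Lemma cont_at_cube_density_pair z : in_cube (N + N) Cbar z -> cont_at_cube (N + N) Cbar f z.
Proof.
  intros Hz. apply (cont_at_cube_widen N); [lia|].
  exact (Hf_cont z (fun j Hj => Hz j ltac:(lia))).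
Qed.

Lemma density_pair_pt x c : in_cube N Cbar x -> in_cube N Cbar c -> f (pair_pt N x c) = f c.
Proof.
  intros Hx Hc. apply density_ext; [|auto|intros; apply pair_pt_lo; auto].
  intros j Hj. rewrite pair_pt_lo; auto.
Qed.

Lemma phi_pair_pt x c :
  phi lam N i (offers_of N (pair_pt N x c)) (pair_pt N x c) = phi lam N i x c.
Proof.
  apply phi_ext; auto; intros j Hj; [apply pair_pt_hi|apply pair_pt_lo; auto].
Qed.

Lemma pen_density_pair_ucont :
  ucont_cube (N + N) Cbar (fun z => phi lam N i (offers_of N z) z * f z).
Proof.
  apply ucont_cube_of_cont; auto. intros z Hz.
  apply cont_at_cube_mult; [apply cont_at_cube_phi_pair; auto|].
  apply cont_at_cube_density_pair; auto.
Qed.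

Lemma pen_density_pair x c : in_cube N Cbar x -> in_cube N Cbar c ->
  phi lam N i (offers_of N (pair_pt N x c)) (pair_pt N x c) * f (pair_pt N x c)
  = pen_density x c.
Proof. intros Hx Hc. unfold pen_density. rewrite phi_pair_pt, density_pair_pt; auto. Qed.

Lemma pen_density_ucont x : in_cube N Cbar x -> ucont_cube N Cbar (pen_density x).
Proof. apply ucont_cube_of_pair with (1 := pen_density_pair_ucont). exact pen_density_pair. Qed.

Lemma ExpPen_cont : forall eps, 0 < eps -> exists del, 0 < del /\
  forall x y, in_cube N Cbar x -> in_cube N Cbar y ->
    (forall j, (j < N)%nat -> Rabs (y j - x j) < del) ->
    Rabs (ExpPen lam N Cbar f i y - ExpPen lam N Cbar f i x) < eps.
Proof.
  intros eps Heps.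
  destruct (cube_int_param_cont N Cbar pen_density _ HC pen_density_pair_ucont pen_density_pair
              eps Heps) as [d [Hd K]].
  exists d. split; [auto|]. intros x y Hx Hy Cl. rewrite !ExpPen_cube_int. apply K; auto.
Qed.

Hypothesis Hu_cont : continuity u.

Lemma pay_density_pair_ucont :
  ucont_cube (N + N) Cbar
    (fun z => (u (d0 + z i - z (N + i)%nat) - phi lam N i (offers_of N z) z) * f z).
Proof.
  apply ucont_cube_of_cont; auto. intros z Hz.
  apply cont_at_cube_mult; [|apply cont_at_cube_density_pair; auto].
  apply cont_at_cube_minus; [|apply cont_at_cube_phi_pair; auto].
  apply (cont_at_cube_comp _ _ _ (fun w => d0 + w i - w (N + i)%nat) u); [|apply Hu_cont].
  apply cont_at_cube_minus; [apply cont_at_cube_plus; [apply cont_at_cube_const|]|];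
    apply cont_at_cube_coord; lia.
Qed.

Lemma pay_density_pair x c : in_cube N Cbar x -> in_cube N Cbar c ->
  (u (d0 + pair_pt N x c i - pair_pt N x c (N + i)%nat)
   - phi lam N i (offers_of N (pair_pt N x c)) (pair_pt N x c)) * f (pair_pt N x c)
  = pay_density x c.
Proof.
  intros Hx Hc. unfold pay_density.
  rewrite phi_pair_pt, density_pair_pt, pair_pt_lo, pair_pt_hi; auto.
Qed.

Lemma pay_density_ucont x : in_cube N Cbar x -> ucont_cube N Cbar (pay_density x).
Proof. apply ucont_cube_of_pair with (1 := pay_density_pair_ucont). exact pay_density_pair. Qed.

Lemma payoff_cont rho : 0 <= rho -> cont_on_cube N Cbar (fun x => payoff lam N Cbar f u d0 i x rho).
Proof.
  intros Hrho x Hx eps Heps.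
  destruct (cube_int_param_cont N Cbar pay_density _ HC pay_density_pair_ucont pay_density_pair
              (eps / 2) ltac:(lra)) as [d1 [Hd1 K1]].
  set (d2 := eps / (2 * (rho + 1))).
  assert (Hd2 : 0 < d2) by (apply Rdiv_lt_0_compat; lra).
  exists (Rmin d1 d2). split; [apply Rmin_pos; auto|].
  intros y Hy Cl. rewrite !payoff_cube_int.
  pose proof (K1 x y Hx Hy (fun j Hj => Rlt_le_trans _ _ _ (Cl j Hj) (Rmin_l _ _))).
  assert (Rabs (y i - x i) < d2) by (eapply Rlt_le_trans; [apply Cl; auto|apply Rmin_r]).
  assert (Rabs (rho * (y i - x i)) <= eps / 2).
  { rewrite Rabs_mult, (Rabs_right rho) by lra.
    apply Rle_trans with (rho * d2); [apply Rmult_le_compat_l; lra|].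
    unfold d2. apply (Rmult_le_reg_r (2 * (rho + 1))); [lra|]. field_simplify; nra. }
  replace (rho * y i + cube_int N Cbar (pay_density y)
           - (rho * x i + cube_int N Cbar (pay_density x)))
    with (rho * (y i - x i) + (cube_int N Cbar (pay_density y) - cube_int N Cbar (pay_density x)))
    by ring.
  eapply Rle_lt_trans; [apply Rabs_triang|]. lra.
Qed.

Variable x : nat -> R.
Hypothesis Hx : in_cube N Cbar x.

Let A c := excess_others N i x c.
Let P c := pos_excess_others N i x c.
Let pen r := pen_density (upd x i r).

Lemma pen_upd_profile r c : pen r c = pen_profile lam (A c) (P c) (r - c i) * f c.
Proof. unfold pen, pen_density. rewrite phi_upd; auto. Qed.

Lemma pen_upd_ucont r : 0 <= r <= Cbar -> ucont_cube N Cbar (pen r).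
Proof. intros Hr. apply pen_density_ucont; auto. apply in_cube_upd; auto. Qed.

Lemma ExpPen_upd_convex : convex_on (fun t => ExpPen lam N Cbar f i (upd x i t)) 0 Cbar.
Proof.
  intros s t l Hs Ht Hl. rewrite !ExpPen_cube_int.
  assert (Hm : 0 <= l * s + (1 - l) * t <= Cbar) by nra.
  rewrite <- (cube_int_lin N Cbar HC (pen s) (pen t)) by (apply pen_upd_ucont; auto).
  apply cube_int_le; [auto|apply pen_upd_ucont; auto|..].
  { apply ucont_cube_lin; apply pen_upd_ucont; auto. }
  intros c Hc. fold (pen (l * s + (1 - l) * t)) (pen s) (pen t). rewrite !pen_upd_profile.
  replace (l * s + (1 - l) * t - c i) with (l * (s - c i) + (1 - l) * (t - c i)) by ring.
  pose proof (pen_profile_convex lam (A c) (P c) Hlam (pos_excess_others_nonneg N i x c)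
                (excess_others_le N i x c) (s - c i) (t - c i) l Hl).
  pose proof (Hf_pos c Hc). nra.
Qed.

Hypothesis Hf_norm : Expect N Cbar f (fun _ => 1) = 1.

Lemma ExpPen_upd_increment s t : 0 <= s -> s <= t -> t <= Cbar ->
  0 <= ExpPen lam N Cbar f i (upd x i t) - ExpPen lam N Cbar f i (upd x i s) <= lam * (t - s).
Proof.
  intros H1 H2 H3. rewrite !ExpPen_cube_int.
  assert (Uf : ucont_cube N Cbar f) by exact density_ucont.
  assert (Hnorm : cube_int N Cbar f = 1).
  { rewrite <- Hf_norm. apply (iint_ext N Cbar HC); [intros; ring|lia|apply in_cube_zero; lra]. }
  assert (Ud := ucont_cube_lin N Cbar (pen t) (pen s) 1 (-1)
                  (pen_upd_ucont t ltac:(lra)) (pen_upd_ucont s ltac:(lra))).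
  replace (cube_int N Cbar (pen_density (upd x i t)) -
           cube_int N Cbar (pen_density (upd x i s)))
    with (cube_int N Cbar (fun c => 1 * pen t c + (-1) * pen s c))
    by (rewrite (cube_int_lin N Cbar HC (pen t) (pen s)) by (apply pen_upd_ucont; lra);
        unfold pen; ring).
  assert (PW : forall c, in_cube N Cbar c ->
            0 <= 1 * pen t c + (-1) * pen s c <= lam * (t - s) * f c).
  { intros c Hc. rewrite !pen_upd_profile.
    pose proof (pen_profile_increment lam (A c) (P c) Hlam (pos_excess_others_nonneg N i x c)
                  (excess_others_le N i x c) (s - c i) (t - c i) ltac:(lra)).
    replace (t - c i - (s - c i)) with (t - s) in * by ring.
    pose proof (Hf_pos c Hc). split; nra. }
  split.
  - pose proof (cube_int_le N Cbar HC (fun _ => 0) _ (ucont_cube_const N Cbar 0) Ud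
                  (fun c Hc => proj1 (PW c Hc))) as Lo.
    rewrite cube_int_const in Lo by auto. lra.
  - pose proof (cube_int_le N Cbar HC _ (fun c => lam * (t - s) * f c) Ud
                  (ucont_cube_scal N Cbar _ _ Uf) (fun c Hc => proj2 (PW c Hc))) as Hi'.
    rewrite (cube_int_scal N Cbar HC f), Hnorm in Hi' by auto. lra.
Qed.

Lemma ExpPen_upd_second_diff_le t h d B : 0 < h -> h <= d -> 0 <= t - h -> t + h <= Cbar ->
  0 <= B -> (forall c, in_cube N Cbar c -> f c <= B) ->
  ExpPen lam N Cbar f i (upd x i (t + h)) + ExpPen lam N Cbar f i (upd x i (t - h))
    - 2 * ExpPen lam N Cbar f i (upd x i t)
  <= 2 * B * lam * h * (2 * (Cbar ^ (N - 1) * (PI * d))) + 2 * B * lam * h * h / d * Cbar ^ N.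
Proof.
  intros Hh Hd Ht1 Ht2 HB Hf_le. rewrite !ExpPen_cube_int. fold (pen (t + h)) (pen (t - h)) (pen t).
  set (L1 := fun c : nat -> R => lorentz d (t - c i)).
  set (L2 := fun c : nat -> R => lorentz d (rsum N (upd x i t) - rsum N c)).
  assert (I1 : cube_int N Cbar L1 <= Cbar ^ (N - 1) * (PI * d))
    by (apply cube_int_lorentz_coord; solve [auto | lra]).
  assert (I2 : cube_int N Cbar L2 <= Cbar ^ (N - 1) * (PI * d))
    by (apply cube_int_lorentz_sum; solve [auto | lra | lia]).
  assert (UL1 : ucont_cube N Cbar L1).
  { apply ucont_cube_of_cont; auto. intros z _. apply cont_at_cube_lorentz; [lra|].
    apply cont_at_cube_minus; [apply cont_at_cube_const|apply cont_at_cube_coord; auto]. }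
  assert (UL2 : ucont_cube N Cbar L2).
  { apply ucont_cube_of_cont; auto. intros z _. apply cont_at_cube_lorentz; [lra|].
    apply cont_at_cube_minus; [apply cont_at_cube_const|].
    apply cont_at_cube_rsum. intros j Hj. apply cont_at_cube_coord; auto. }
  set (a1 := 2 * B * lam * h). set (a3 := 2 * B * lam * h * h / d).
  assert (PW : forall c, in_cube N Cbar c ->
     1 * (1 * pen (t + h) c + 1 * pen (t - h) c) + -2 * pen t c
     <= a1 * (1 * L1 c + 1 * L2 c) + a3 * 1).
  { intros c Hc. rewrite !pen_upd_profile.
    set (s := t - c i).
    replace (t + h - c i) with (s + h) by (unfold s; ring).
    replace (t - h - c i) with (s - h) by (unfold s; ring).
    assert (EL2 : L2 c = lorentz d (s + A c)).
    { unfold L2. rewrite rsum_upd_minus by auto. unfold s, A. f_equal. ring. }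
    rewrite EL2.
    pose proof (pen_profile_second_diff lam (A c) (P c) Hlam (pos_excess_others_nonneg N i x c)
                  (excess_others_le N i x c) s h d Hh Hd) as K.
    pose proof (Hf_pos c Hc). pose proof (Hf_le c Hc).
    pose proof (lorentz_nonneg d s ltac:(lra)). pose proof (lorentz_nonneg d (s + A c) ltac:(lra)).
    set (Y := lam * h * (2 * lorentz d s + 2 * lorentz d (s + A c)) + 2 * lam * h * h / d) in K.
    assert (HY : 0 <= Y).
    { unfold Y. apply Rplus_le_le_0_compat; [apply Rmult_le_pos; [apply Rmult_le_pos|]; lra|].
      apply Rdiv_le_0_compat; [repeat apply Rmult_le_pos|]; lra. }
    replace (a1 * (1 * L1 c + 1 * lorentz d (s + A c)) + a3 * 1) with (Y * B)
      by (unfold a1, a3, Y, L1, s; field; lra).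
    set (X := pen_profile lam (A c) (P c) (s + h) + pen_profile lam (A c) (P c) (s - h)
              - 2 * pen_profile lam (A c) (P c) s) in K.
    replace (1 * (1 * (pen_profile lam (A c) (P c) (s + h) * f c)
                  + 1 * (pen_profile lam (A c) (P c) (s - h) * f c))
             + -2 * (pen_profile lam (A c) (P c) s * f c)) with (X * f c) by (unfold X; ring).
    apply Rle_trans with (Y * f c); [apply Rmult_le_compat_r|apply Rmult_le_compat_l]; lra. }
  assert (Up := pen_upd_ucont (t + h) ltac:(lra)).
  assert (Um := pen_upd_ucont (t - h) ltac:(lra)).
  assert (U0 := pen_upd_ucont t ltac:(lra)).
  assert (U12 := ucont_cube_lin N Cbar _ _ 1 1 Up Um).
  assert (UL12 := ucont_cube_lin N Cbar L1 L2 1 1 UL1 UL2).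
  pose proof (cube_int_le N Cbar HC _ _ (ucont_cube_lin N Cbar _ _ 1 (-2) U12 U0)
               (ucont_cube_lin N Cbar _ _ a1 a3 UL12 (ucont_cube_const N Cbar 1)) PW) as Int.
  cbv beta in Int.
  rewrite (cube_int_lin N Cbar HC _ _ 1 (-2) U12 U0), (cube_int_lin N Cbar HC _ _ 1 1 Up Um),
    (cube_int_lin N Cbar HC _ _ a1 a3 UL12 (ucont_cube_const N Cbar 1)),
    (cube_int_lin N Cbar HC _ _ 1 1 UL1 UL2), cube_int_const in Int by auto.
  assert (0 <= a1) by (unfold a1; repeat apply Rmult_le_pos; lra).
  enough (a1 * (cube_int N Cbar L1 + cube_int N Cbar L2) <= a1 * (2 * (Cbar ^ (N - 1) * (PI * d))))
    by (unfold a1, a3 in *; lra).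
  apply Rmult_le_compat_l; lra.
Qed.

Lemma ExpPen_upd_second_diff_small t : 0 < t < Cbar ->
  forall eps, 0 < eps -> exists eta, 0 < eta /\
  forall h, 0 < h < eta -> 0 <= t - h -> t + h <= Cbar ->
    ExpPen lam N Cbar f i (upd x i (t + h)) + ExpPen lam N Cbar f i (upd x i (t - h))
      - 2 * ExpPen lam N Cbar f i (upd x i t) <= eps * h.
Proof.
  intros Ht eps He.
  destruct density_bound as [B [HB Hf_le]].
  pose proof PI_RGT_0.
  assert (0 <= Cbar ^ (N - 1)) by (apply pow_le; lra).
  assert (0 <= Cbar ^ N) by (apply pow_le; lra).
  set (K1 := 4 * B * lam * Cbar ^ (N - 1) * PI).
  set (K2 := 2 * B * lam * Cbar ^ N).
  assert (0 <= K1) by (unfold K1; apply Rmult_le_pos; [repeat apply Rmult_le_pos|]; lra).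
  assert (0 <= K2) by (unfold K2; repeat apply Rmult_le_pos; lra).
  set (d := eps / (2 * (K1 + 1))).
  assert (Hd : 0 < d) by (apply Rdiv_lt_0_compat; lra).
  assert (Kd : K1 * d <= eps / 2).
  { unfold d. apply (Rmult_le_reg_r (2 * (K1 + 1))); [lra|]. field_simplify; nra. }
  set (eta := Rmin d (eps * d / (2 * (K2 + 1)))).
  exists eta. split; [apply Rmin_pos; [lra|apply Rdiv_lt_0_compat; nra]|].
  intros h Hh Hth1 Hth2.
  assert (h < d /\ h < eps * d / (2 * (K2 + 1))) as [Hh1 Hh2].
  { split; eapply Rlt_le_trans; try apply Hh; [apply Rmin_l|apply Rmin_r]. }
  eapply Rle_trans; [apply (ExpPen_upd_second_diff_le t h d B); auto; lra|].
  replace (2 * B * lam * h * (2 * (Cbar ^ (N - 1) * (PI * d))) + 2 * B * lam * h * h / d * Cbar ^ N)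
    with (h * (K1 * d + K2 * h / d)) by (unfold K1, K2; field; lra).
  enough (K2 * h / d <= eps / 2) by nra.
  apply (Rmult_le_reg_r d); [lra|]. field_simplify; [|lra].
  apply Rle_trans with (K2 * (eps * d / (2 * (K2 + 1)))); [apply Rmult_le_compat_l; lra|].
  apply (Rmult_le_reg_r (2 * (K2 + 1))); [lra|]. field_simplify; nra.
Qed.

Lemma ExpPen_upd_C1 : C1_on (fun t => ExpPen lam N Cbar f i (upd x i t)) 0 Cbar.
Proof.
  apply (C1_on_of_convex _ Cbar lam HC ExpPen_upd_convex ExpPen_upd_increment).
  exact ExpPen_upd_second_diff_small.
Qed.

Hypothesis Hu_concave : forall s t l, 0 <= l <= 1 ->
  l * u s + (1 - l) * u t <= u (l * s + (1 - l) * t).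

Lemma payoff_upd_concave rho :
  concave_on (fun t => payoff lam N Cbar f u d0 i (upd x i t) rho) 0 Cbar.
Proof.
  intros s t l Hs Ht Hl. rewrite !payoff_cube_int, !upd_same.
  assert (Hm : 0 <= l * s + (1 - l) * t <= Cbar) by nra.
  assert (U : forall r, 0 <= r <= Cbar -> ucont_cube N Cbar (pay_density (upd x i r)))
    by (intros r Hr; apply pay_density_ucont; auto; apply in_cube_upd; auto).
  enough (l * cube_int N Cbar (pay_density (upd x i s))
          + (1 - l) * cube_int N Cbar (pay_density (upd x i t))
          <= cube_int N Cbar (pay_density (upd x i (l * s + (1 - l) * t)))) by nra.
  rewrite <- (cube_int_lin N Cbar HC) by auto.
  apply cube_int_le; [auto|apply ucont_cube_lin; auto|auto|].
  intros c Hc. unfold pay_density. rewrite !upd_same, !phi_upd by auto. fold (A c) (P c).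
  replace (l * s + (1 - l) * t - c i) with (l * (s - c i) + (1 - l) * (t - c i)) by ring.
  pose proof (pen_profile_convex lam (A c) (P c) Hlam (pos_excess_others_nonneg N i x c)
                (excess_others_le N i x c) (s - c i) (t - c i) l Hl).
  pose proof (Hu_concave (d0 + c i - s) (d0 + c i - t) l Hl) as Ku.
  replace (l * (d0 + c i - s) + (1 - l) * (d0 + c i - t)) with (d0 + c i - (l * s + (1 - l) * t))
    in Ku by ring.
  pose proof (Hf_pos c Hc). nra.
Qed.

End Model.

Theorem mainTheorem2
  (N : nat) (HN : (1 <= N)%nat) (Cbar : R) (HCbar : 0 < Cbar)
  (lam : R) (Hlam : 0 < lam)
  (f : (nat -> R) -> R)
  (Hf_cont : cont_on_cube N Cbar f)
  (Hf_pos : forall c, in_cube N Cbar c -> 0 < f c)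
  (Hf_norm : Expect N Cbar f (fun _ => 1) = 1)
  (u : R -> R)
  (Hu_C1 : exists u', (forall t, derivable_pt_lim u t (u' t)) /\ continuity u')
  (Hu_nonneg : forall t, 0 <= u t)
  (Hu_concave : forall s t l, 0 <= l <= 1 ->
                  l * u s + (1 - l) * u t <= u (l * s + (1 - l) * t))
  (Hu_incr : forall s t, s <= t -> u s <= u t)
  (d0 : R) (Hd0 : Cbar < d0)
  (rho : R) (Hrho : 0 <= rho)
  (i : nat) (Hi : (i < N)%nat) :
  (forall x : nat -> R, in_cube N Cbar x ->
     C1_on (fun t => ExpPen lam N Cbar f i (upd x i t)) 0 Cbar /\
     convex_on (fun t => ExpPen lam N Cbar f i (upd x i t)) 0 Cbar /\
     concave_on (fun t => payoff lam N Cbar f u d0 i (upd x i t) rho) 0 Cbar) /\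
  (forall x0 : nat -> R, in_cube N Cbar x0 ->
     forall eps, 0 < eps -> exists del, 0 < del /\
       forall y, in_cube N Cbar y -> y i = x0 i ->
         (forall j, (j < N)%nat -> Rabs (y j - x0 j) < del) ->
         Rabs (ExpPen lam N Cbar f i y - ExpPen lam N Cbar f i x0) < eps) /\
  cont_on_cube N Cbar (fun x => payoff lam N Cbar f u d0 i x rho).
Proof.
  assert (Hu_cont : continuity u).
  { destruct Hu_C1 as [u' [Hu' _]]. intros t.
    apply derivable_continuous_pt. exists (u' t). apply Hu'. }
  split; [|split].
  - intros x Hx. split; [|split].
    + apply ExpPen_upd_C1; auto.
    + apply ExpPen_upd_convex; auto.
    + apply payoff_upd_concave; auto.
  - intros x0 Hx0 eps Heps.
    destruct (ExpPen_cont N Cbar lam f i HCbar Hlam Hi Hf_cont eps Heps) as [del [Hdel K]].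
    exists del. split; [auto|]. intros y Hy _ Cl. apply K; auto.
  - apply payoff_cont; auto.
Qed.
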